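(* Let $\Gamma$ be a cycle graph (a connected metric graph all of whose vertices have degree two) whose edge lengths are natural numbers $L(e)$, $e\in\mathcal E$, with $\gcd\{L(e):e\in\mathcal E\}=1$ and with $\widetilde E:=\sum_{e\in\mathcal E}L(e)$ odd. Then $$\lambda_{\widetilde E+1}\big(L^{\rm st}(\Gamma)\big)>\lambda_{\widetilde E}\big(L^{\rm D}(\Gamma)\big),$$ i.e. the inequality $\lambda_{n+1}(L^{\rm st}(\Gamma))\le\lambda_n(L^{\rm D}(\Gamma))$ fails for $n=\widetilde E$.
   Context: A finite compact metric graph $\Gamma$ consists of finitely many edges $e_n=[x_{2n-1},x_{2n}]\subset\mathbb R$ of positive lengths $L(e_n)$ and a vertex set $\mathcal V$ which is a partition of the set of all edge endpoints; $\mathcal E$ is the edge set; the degree of a vertex is the number of endpoints it contains. $f(x_j)$ denotes the limit of $f$ at endpoint $x_j$, and $\partial f(x_j)=f'(x_j)$ if $x_j$ is a left endpoint, $-f'(x_j)$ if a right endpoint. The standard Laplacian $L^{\rm st}(\Gamma)$ acts as $-f''$ on each edge with domain all $f\in W^2_2(\Gamma\setminus\mathcal V)=\bigoplus_nW^2_2(e_n)$ with, at every vertex $v$, $f(x_i)=f(x_j)$ for $x_i,x_j\in v$ and $\sum_{x_j\in v}\partial f(x_j)=0$. The Dirichlet Laplacian $L^{\rm D}(\Gamma)$ acts as $-f''$ with domain all $f\in W^2_2(\Gamma\setminus\mathcal V)$ with $f(x_j)=0$ at every endpoint $x_j$. Eigenvalues $\lambda_1\le\lambda_2\le\dots$ are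 counted with multiplicities. *)

From Stdlib Require Import Reals Lra Lia Arith List.
From Stdlib Require Import Relations.Relation_Operators.
Open Scope R_scope.

(** * Finite compact metric graphs
   A metric graph with [N] edges e_0, ..., e_(N-1); edge [n] is the interval
   [0, Lg n] (a translate of the paper's [x_(2n-1), x_(2n)]).
   Endpoints are indexed by [j < 2N]: endpoint [2n] is the left endpoint of
   edge [n] (position 0), endpoint [2n+1] its right endpoint (position Lg n).
   The vertex set is the partition of endpoints induced by a labelling
   [V : nat -> nat]: endpoints j, k lie in the same vertex iff V j = V k. *)

Fixpoint rsum (n : nat) (g : nat -> R) : R :=
  match n with O => 0 | S m => rsum m g + g m end.

Definition ep_edge (j : nat) : nat := Nat.div j 2.
Definition ep_pos (Lg : nat -> R) (j : nat) : R :=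
  if Nat.even j then 0 else Lg (Nat.div j 2).

Definition degree (N : nat) (V : nat -> nat) (j : nat) : nat :=
  length (filter (fun k => Nat.eqb (V k) (V j)) (seq 0 (2 * N))).

Definition ep_step (N : nat) (V : nat -> nat) (j k : nat) : Prop :=
  (j < 2 * N)%nat /\ (k < 2 * N)%nat /\ (ep_edge j = ep_edge k \/ V j = V k).

Definition connected_graph (N : nat) (V : nat -> nat) : Prop :=
  forall j k, (j < 2 * N)%nat -> (k < 2 * N)%nat ->
    clos_refl_trans nat (ep_step N V) j k.

Definition cycle_graph (N : nat) (V : nat -> nat) : Prop :=
  (1 <= N)%nat /\ connected_graph N V /\
  forall j, (j < 2 * N)%nat -> degree N V j = 2%nat.

(** Functions on the graph: [f n] is the function on edge [n]. *)
(* boundary value f(x_j) and normal derivative ∂f(x_j) *)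
Definition bval (Lg : nat -> R) (f : nat -> R -> R) (j : nat) : R :=
  f (ep_edge j) (ep_pos Lg j).
Definition bder (Lg : nat -> R) (df : nat -> R -> R) (j : nat) : R :=
  if Nat.even j then df (ep_edge j) 0 else - df (ep_edge j) (Lg (ep_edge j)).

Definition standard_cond (N : nat) (Lg : nat -> R) (V : nat -> nat)
  (f df : nat -> R -> R) : Prop :=
  (forall j k, (j < 2 * N)%nat -> (k < 2 * N)%nat -> V j = V k ->
      bval Lg f j = bval Lg f k) /\
  (forall j, (j < 2 * N)%nat ->
      rsum (2 * N) (fun k => if Nat.eqb (V k) (V j) then bder Lg df k else 0) = 0).

Definition dirichlet_cond (N : nat) (Lg : nat -> R) (V : nat -> nat)
  (f df : nat -> R -> R) : Prop :=
  forall j, (j < 2 * N)%nat -> bval Lg f j = 0.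

Definition BCond := (nat -> R -> R) -> (nat -> R -> R) -> Prop.

(* eigenfunction: on each edge, f is (the restriction of) a C^2 function with
   derivatives df, ddf, solving -f'' = lam f inside the edge, and f satisfies
   the vertex conditions.  (Any W^2_2 solution of -f''=lam f on an interval is
   a trigonometric/linear function, hence of this form.) *)
Definition eigenfun (N : nat) (Lg : nat -> R) (BC : BCond) (lam : R)
  (f df ddf : nat -> R -> R) : Prop :=
  (forall n x, derivable_pt_lim (f n) x (df n x) /\
               derivable_pt_lim (df n) x (ddf n x)) /\
  (forall n x, (n < N)%nat -> 0 < x < Lg n -> - ddf n x = lam * f n x) /\
  BC f df.

(* there are k linearly independent (as functions on the graph) eigenfunctions
   with eigenvalues <= lam, i.e. the number of eigenvalues <= lam counted with
   multiplicity is at least k *)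
Definition count_ge (N : nat) (Lg : nat -> R) (BC : BCond) (lam : R) (k : nat) : Prop :=
  exists (lams : nat -> R) (fs dfs ddfs : nat -> nat -> R -> R),
    (forall i, (i < k)%nat -> lams i <= lam /\
        eigenfun N Lg BC (lams i) (fs i) (dfs i) (ddfs i)) /\
    (forall c : nat -> R,
        (forall n x, (n < N)%nat -> 0 <= x <= Lg n ->
           rsum k (fun i => c i * fs i n x) = 0) ->
        forall i, (i < k)%nat -> c i = 0).

(* lam is the n-th eigenvalue (n >= 1), eigenvalues counted with multiplicity
   in nondecreasing order *)
Definition is_nth_eigenvalue (N : nat) (Lg : nat -> R) (BC : BCond)
  (n : nat) (lam : R) : Prop :=
  count_ge N Lg BC lam n /\ forall mu, mu < lam -> ~ count_ge N Lg BC mu n.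

Fixpoint tot_len (n : nat) (g : nat -> nat) : nat :=
  match n with O => O | S m => (tot_len m g + g m)%nat end.
Fixpoint gcd_all (n : nat) (g : nat -> nat) : nat :=
  match n with O => O | S m => Nat.gcd (gcd_all m g) (g m) end.

(** Let the cycle graph Γ have integer edge lengths [ell n] and odd total
   length [E = sum_n ell n].  We show
     λ_(E+1)(L^st) = (π (E+1) / E)^2  >  π^2 = λ_E(L^D).

   Dirichlet side: the problem decouples into the edges.  On an edge of length
   [l] the eigenfunctions are [sin (k π x / l)], [k >= 1]; the [E] modes with
   [k <= ell n] have eigenvalue at most π^2 and are orthogonal, hence
   independent, while by uniqueness for [-y'' = λ y] every eigenfunction with
   eigenvalue below π^2 combines the [E - N] modes with [k < ell n].

   Standard side: walking once around the cycle unrolls Γ onto the circle of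
   length [E], and standard eigenfunctions are exactly the transports of
   [E]-periodic solutions of [-y'' = λ y].  The [E + 1] functions 1, cos and
   sin of frequency [2 π k / E], [2 k <= E + 1], give eigenvalues at most
   (π (E+1) / E)^2; below that value a periodic solution has frequency
   [2 π k / E] with [2 k < E + 1], i.e. [2 k < E] as [E] is odd, which leaves
   an [E]-dimensional span.  Upper bounds on eigenvalue counts use that more
   than [length L] functions in the span of a family indexed by [L] are
   linearly dependent. *)

From Stdlib Require Import Reals Lra Lia List ZArith Permutation Classical ClassicalEpsilon.
From Stdlib Require Import Relations.Relation_Operators Relations.Operators_Properties.
From Coquelicot Require Import Coquelicot.
Open Scope R_scope.

Lemma rsum_ext n f g : (forall i, (i < n)%nat -> f i = g i) -> rsum n f = rsum n g.
Proof.
  induction n; simpl; intros H; [reflexivity|].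
  rewrite IHn by (intros; apply H; lia). rewrite H by lia. reflexivity.
Qed.

Lemma rsum_plus n f g : rsum n (fun i => f i + g i) = rsum n f + rsum n g.
Proof. induction n; simpl; [lra|]. rewrite IHn; lra. Qed.

Lemma rsum_scal n c f : rsum n (fun i => c * f i) = c * rsum n f.
Proof. induction n; simpl; [lra|]. rewrite IHn; lra. Qed.

Lemma rsum_mult_r n (g : nat -> R) y : rsum n g * y = rsum n (fun i => g i * y).
Proof. induction n; simpl; [ring|]. rewrite <- IHn. ring. Qed.

Lemma rsum_zero n f : (forall i, (i < n)%nat -> f i = 0) -> rsum n f = 0.
Proof.
  intros H. rewrite (rsum_ext n f (fun _ => 0)) by (intros; apply H; auto).
  clear H. induction n; simpl; [lra|]. rewrite IHn; lra.
Qed.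

Lemma rsum_single n a g :
  (a < n)%nat -> rsum n (fun i => if Nat.eqb i a then g i else 0) = g a.
Proof.
  induction n; intros Ha; [lia|]. simpl.
  destruct (Nat.eq_dec a n) as [->|Hne].
  - rewrite Nat.eqb_refl. rewrite rsum_zero; [lra|]. intros i Hi.
    destruct (Nat.eqb_spec i n); [lia|reflexivity].
  - rewrite IHn by lia. destruct (Nat.eqb_spec n a); [lia|lra].
Qed.

Lemma rsum_pair n (P : nat -> bool) (g : nat -> R) a b :
  (a < n)%nat -> (b < n)%nat -> a <> b ->
  (forall k, (k < n)%nat -> P k = true <-> k = a \/ k = b) ->
  rsum n (fun k => if P k then g k else 0) = g a + g b.
Proof.
  intros Ha Hb Hab HP.
  rewrite (rsum_ext n _ (fun k => (if Nat.eqb k a then g k else 0) + (if Nat.eqb k b then g k else 0))).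
  - rewrite rsum_plus, !rsum_single; auto.
  - intros k Hk. specialize (HP k Hk).
    destruct (P k); destruct (Nat.eqb_spec k a); destruct (Nat.eqb_spec k b); subst; try lra;
      exfalso; intuition congruence.
Qed.

Definition lsum {X : Type} (L : list X) (g : X -> R) : R :=
  fold_right (fun x acc => g x + acc) 0 L.

Lemma lsum_ext {X} (L : list X) f g : (forall y, In y L -> f y = g y) -> lsum L f = lsum L g.
Proof. induction L; simpl; intros H; [lra|]. rewrite H, IHL by auto. lra. Qed.

Lemma lsum_zero {X} (L : list X) g : (forall x, In x L -> g x = 0) -> lsum L g = 0.
Proof. induction L; simpl; intros H; [lra|]. rewrite H by auto. rewrite IHL by auto. lra. Qed.

Lemma lsum_plus {X} (L : list X) f g : lsum L (fun y => f y + g y) = lsum L f + lsum L g.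
Proof. induction L; simpl; [lra|]. rewrite IHL. lra. Qed.

Lemma lsum_scal {X} (L : list X) c f : lsum L (fun y => c * f y) = c * lsum L f.
Proof. induction L; simpl; [lra|]. rewrite IHL. lra. Qed.

Lemma lsum_count {X} (eqd : forall x y : X, {x = y} + {x <> y}) (L : list X) y0 c :
  lsum L (fun y => if eqd y y0 then c else 0) = INR (count_occ eqd L y0) * c.
Proof.
  induction L as [|z L IH]; simpl; [ring|]. rewrite IH.
  destruct (eqd z y0) as [->|Hne]; [rewrite S_INR; ring|ring].
Qed.

Lemma lsum_select {X} (eqd : forall x y : X, {x = y} + {x <> y}) (L : list X) y0 :
  In y0 L -> exists a : X -> R, forall h, lsum L (fun y => a y * h y) = h y0.
Proof.
  intros Hin. assert (Hm : (0 < count_occ eqd L y0)%nat) by (apply count_occ_In; auto).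
  exists (fun y => if eqd y y0 then / INR (count_occ eqd L y0) else 0). intros h.
  rewrite (lsum_ext L _ (fun y => if eqd y y0 then / INR (count_occ eqd L y0) * h y0 else 0)).
  - rewrite lsum_count. field. apply not_0_INR. lia.
  - intros y _. destruct (eqd y y0) as [->|]; ring.
Qed.

Lemma lsum_select2 {X} (eqd : forall x y : X, {x = y} + {x <> y}) (L : list X) y1 y2 A B :
  In y1 L -> In y2 L ->
  exists a : X -> R, forall h, lsum L (fun y => a y * h y) = A * h y1 + B * h y2.
Proof.
  intros H1 H2. destruct (lsum_select eqd L y1 H1) as [a1 Ha1].
  destruct (lsum_select eqd L y2 H2) as [a2 Ha2].
  exists (fun y => A * a1 y + B * a2 y). intros h.
  rewrite (lsum_ext L _ (fun y => A * (a1 y * h y) + B * (a2 y * h y))) by (intros; ring).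
  rewrite lsum_plus, !lsum_scal, Ha1, Ha2. reflexivity.
Qed.

Lemma rsum_lsum {X} k (L : list X) (c : nat -> R) (a : nat -> X -> R) (h : X -> R) :
  rsum k (fun i => c i * lsum L (fun y => a i y * h y)) =
  lsum L (fun y => rsum k (fun i => c i * a i y) * h y).
Proof.
  induction k; simpl.
  - induction L; simpl; [lra|]. rewrite <- IHL. lra.
  - rewrite IHk. clear IHk. induction L; simpl; [lra|]. rewrite <- IHL. lra.
Qed.

(** ** Linear dependence
   More than [length L] vectors of R^L are linearly dependent (proved by
   eliminating one coordinate at a time). *)

Lemma vectors_dependent {X} (eqd : forall x y : X, {x = y} + {x <> y}) :
  forall n (L : list X) k (a : nat -> X -> R), length L = n -> (n < k)%nat ->
  exists c : nat -> R, (exists i, (i < k)%nat /\ c i <> 0) /\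
    forall x, In x L -> rsum k (fun i => c i * a i x) = 0.
Proof.
  induction n as [n IH] using lt_wf_ind.
  intros L k a HL Hk. destruct k as [|k']; [lia|].
  destruct (classic (exists x, In x L /\ a k' x <> 0)) as [[x0 [Hx0 Ha0]]|Hno].
  - (* eliminate the coordinate [x0] using the last vector [a k'] *)
    set (L' := remove eqd x0 L).
    assert (HL' : (length L' < n)%nat) by (subst; apply remove_length_lt; auto).
    set (b := fun i x => a i x - a i x0 / a k' x0 * a k' x).
    destruct (IH (length L') HL' L' k' b eq_refl ltac:(lia)) as [c' [[i [Hi Hci]] Hc']].
    exists (fun i => if Nat.ltb i k' then c' i
                     else - (rsum k' (fun i => c' i * a i x0)) / a k' x0).
    split.
    + exists i. split; [lia|]. destruct (Nat.ltb_spec i k'); [auto|lia].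
    + intros x Hx. simpl. destruct (Nat.ltb_spec k' k'); [lia|].
      rewrite (rsum_ext k' _ (fun i => c' i * a i x))
        by (intros j Hj; destruct (Nat.ltb_spec j k'); [auto|lia]).
      destruct (eqd x x0) as [->|Hne].
      * field. auto.
      * assert (Hin : In x L') by (apply in_in_remove; auto).
        specialize (Hc' x Hin). unfold b in Hc'.
        rewrite (rsum_ext k' _ (fun i => c' i * a i x + (- (a k' x / a k' x0)) * (c' i * a i x0)))
          in Hc' by (intros; field; auto).
        rewrite rsum_plus, rsum_scal in Hc'. rewrite <- Hc'. unfold Rdiv. ring.
  -
    exists (fun i => if Nat.eqb i k' then 1 else 0). split.
    + exists k'. split; [lia|]. rewrite Nat.eqb_refl. lra.
    + intros x Hx. simpl. rewrite Nat.eqb_refl.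
      rewrite rsum_zero.
      * assert (a k' x = 0) by (apply NNPP; intro; apply Hno; eauto). rewrite H; lra.
      * intros i Hi. destruct (Nat.eqb_spec i k'); [lia|lra].
Qed.

Lemma span_dependent {X} (eqd : forall x y : X, {x = y} + {x <> y}) (L : list X) k
  (v : nat -> nat -> R -> R) (g : X -> nat -> R -> R) (a : nat -> X -> R)
  (D : nat -> R -> Prop) :
  (length L < k)%nat ->
  (forall i n x, (i < k)%nat -> D n x -> v i n x = lsum L (fun y => a i y * g y n x)) ->
  exists c : nat -> R, (exists i, (i < k)%nat /\ c i <> 0) /\
    forall n x, D n x -> rsum k (fun i => c i * v i n x) = 0.
Proof.
  intros Hk Hv. destruct (vectors_dependent eqd (length L) L k a eq_refl Hk) as [c [Hc Hc0]].
  exists c. split; auto. intros n x Hd.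
  rewrite (rsum_ext k _ (fun i => c i * lsum L (fun y => a i y * g y n x)))
    by (intros; rewrite Hv; auto).
  rewrite rsum_lsum. apply lsum_zero. intros y Hy. rewrite Hc0 by auto. lra.
Qed.

Lemma finite_choice {T : Type} (d : T) (k : nat) (P : nat -> T -> Prop) :
  (forall i, (i < k)%nat -> exists a, P i a) ->
  exists A : nat -> T, forall i, (i < k)%nat -> P i (A i).
Proof.
  intros H.
  assert (H' : forall i, exists a, (i < k)%nat -> P i a).
  { intros i. destruct (lt_dec i k) as [Hi|Hi].
    - destruct (H i Hi) as [a Ha]. exists a; auto.
    - exists d. intros; lia. }
  exists (fun i => proj1_sig (constructive_indefinite_description _ (H' i))).
  intros i Hi. exact (proj2_sig (constructive_indefinite_description _ (H' i)) Hi).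
Qed.

Fixpoint find_last (P : nat -> bool) (m : nat) : nat :=
  match m with O => O | S m' => if P m' then m' else find_last P m' end.

Lemma find_last_spec P m : (exists t, (t < m)%nat /\ P t = true) ->
  (find_last P m < m)%nat /\ P (find_last P m) = true.
Proof.
  induction m; intros [t [Ht Pt]]; [lia|]. simpl.
  destruct (P m) eqn:E; [split; auto|].
  destruct (Nat.eq_dec t m) as [->|Hne]; [congruence|].
  destruct IHm as [H1 H2]; [exists t; split; auto; lia|]. split; auto.
Qed.

Lemma find_last_max P m : forall t, (find_last P m < t)%nat -> (t < m)%nat -> P t = false.
Proof.
  induction m; intros t H1 H2; [lia|]. simpl in H1. destruct (P m) eqn:E; [lia|].
  destruct (Nat.eq_dec t m) as [->|Hne]; auto. apply IHm; auto; lia.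
Qed.

(* [tot_len] as a list sum, to reorder the summands *)
Lemma tot_len_list n g : tot_len n g = list_sum (map g (seq 0 n)).
Proof.
  induction n; [reflexivity|]. rewrite seq_S, map_app, list_sum_app. simpl tot_len. rewrite IHn.
  simpl. lia.
Qed.

Lemma nodup_map_seq (f : nat -> nat) n :
  (forall a b, (a < n)%nat -> (b < n)%nat -> f a = f b -> a = b) -> NoDup (map f (seq 0 n)).
Proof.
  intros H. assert (G : forall s m, (s + m = n)%nat -> NoDup (map f (seq s m))).
  { intros s m. revert s. induction m; intros s Hs; simpl; constructor.
    - rewrite in_map_iff. intros [y [Ey Hy]]. rewrite in_seq in Hy.
      apply H in Ey; lia.
    - apply IHm. lia. }
  apply G. lia.
Qed.

(** In a graph all of whose vertices have degree two every endpoint [j] has a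
   unique [partner] at its vertex.  Traversing an edge and then passing
   through a vertex gives the map [next_end]; its orbit from endpoint [0]
   visits, in a connected graph, every edge exactly once before returning
   after [N] steps. *)

Section Endpoints.
Open Scope nat_scope.

Definition other_end (j : nat) : nat := if Nat.even j then S j else pred j.

Lemma div2_double q : Nat.div (2 * q) 2 = q.
Proof. rewrite Nat.mul_comm, Nat.div_mul; lia. Qed.

Lemma div2_double_succ q : Nat.div (2 * q + 1) 2 = q.
Proof. replace (2 * q + 1) with (1 + q * 2) by lia. rewrite Nat.div_add by lia. simpl. lia. Qed.

Lemma even_double q : Nat.even (2 * q) = true.
Proof. rewrite Nat.even_mul. reflexivity. Qed.

Lemma even_double_succ q : Nat.even (2 * q + 1) = false.
Proof. rewrite Nat.even_add, Nat.even_mul. reflexivity. Qed.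

Lemma even_odd_cases j : (exists q, j = 2 * q) \/ (exists q, j = 2 * q + 1).
Proof. destruct (Nat.Even_or_Odd j) as [[q Hq]|[q Hq]]; [left|right]; exists q; auto. Qed.

Lemma other_end_invol j : other_end (other_end j) = j.
Proof.
  unfold other_end. destruct (even_odd_cases j) as [[q ->]|[q ->]].
  - rewrite even_double. replace (S (2 * q)) with (2 * q + 1) by lia.
    rewrite even_double_succ. lia.
  - rewrite even_double_succ. replace (pred (2 * q + 1)) with (2 * q) by lia.
    rewrite even_double. lia.
Qed.

Lemma other_end_neq j : other_end j <> j.
Proof.
  unfold other_end. destruct (even_odd_cases j) as [[q ->]|[q ->]];
    rewrite ?even_double, ?even_double_succ; lia.
Qed.

Lemma other_end_edge j : ep_edge (other_end j) = ep_edge j.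
Proof.
  unfold other_end, ep_edge. destruct (even_odd_cases j) as [[q ->]|[q ->]].
  - rewrite even_double. replace (S (2 * q)) with (2 * q + 1) by lia.
    rewrite div2_double, div2_double_succ. reflexivity.
  - rewrite even_double_succ. replace (pred (2 * q + 1)) with (2 * q) by lia.
    rewrite div2_double, div2_double_succ. reflexivity.
Qed.

Lemma other_end_lt N j : j < 2 * N -> other_end j < 2 * N.
Proof.
  unfold other_end. destruct (even_odd_cases j) as [[q ->]|[q ->]];
    rewrite ?even_double, ?even_double_succ; lia.
Qed.

Lemma edge_lt N j : j < 2 * N -> ep_edge j < N.
Proof.
  unfold ep_edge. destruct (even_odd_cases j) as [[q ->]|[q ->]];
    rewrite ?div2_double, ?div2_double_succ; lia.
Qed.

Lemma same_edge_cases j k : ep_edge j = ep_edge k -> k = j \/ k = other_end j.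
Proof.
  unfold ep_edge, other_end.
  destruct (even_odd_cases j) as [[q ->]|[q ->]]; destruct (even_odd_cases k) as [[r ->]|[r ->]];
    rewrite ?div2_double, ?div2_double_succ, ?even_double, ?even_double_succ; lia.
Qed.

End Endpoints.

(* the other endpoint at the vertex of [j] (meaningful when it has degree two) *)
Definition partner (N : nat) (V : nat -> nat) (j : nat) : nat :=
  match filter (fun k => Nat.eqb (V k) (V j)) (seq 0 (2 * N)) with
  | a :: b :: _ => if Nat.eqb a j then b else a
  | _ => j end.

Definition next_end (N : nat) (V : nat -> nat) (j : nat) : nat := partner N V (other_end j).

Definition walk (N : nat) (V : nat -> nat) (t : nat) : nat := Nat.iter t (next_end N V) 0%nat.

Lemma exists_least (Q : nat -> Prop) :
  (exists n, Q n) -> exists n, Q n /\ forall m, (m < n)%nat -> ~ Q m.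
Proof.
  intros [n Hn]. induction n as [n IH] using lt_wf_ind.
  destruct (classic (exists m, (m < n)%nat /\ Q m)) as [[m [Hm Qm]]|Hno].
  - apply (IH m Hm Qm).
  - exists n. split; auto. intros m Hm Qm. apply Hno; eauto.
Qed.

Section Walk.
Open Scope nat_scope.
Variable N : nat.
Variable V : nat -> nat.
Hypothesis Hdeg : forall j, j < 2 * N -> degree N V j = 2.

Lemma partner_spec j : j < 2 * N ->
  partner N V j < 2 * N /\ partner N V j <> j /\ V (partner N V j) = V j /\
  forall k, k < 2 * N -> V k = V j -> k = j \/ k = partner N V j.
Proof.
  intros Hj. pose proof (Hdeg j Hj) as Hd. unfold degree in Hd. unfold partner.
  remember (filter (fun k => Nat.eqb (V k) (V j)) (seq 0 (2 * N))) as l eqn:El.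
  assert (Hnd : NoDup l) by (subst; apply NoDup_filter, seq_NoDup).
  assert (Hin : forall k, In k l <-> k < 2 * N /\ V k = V j).
  { intros k. subst l. rewrite filter_In, in_seq, Nat.eqb_eq. lia. }
  clear El.
  destruct l as [|a [|b [|c l']]]; simpl in Hd; try discriminate.
  assert (Ha := proj1 (Hin a) (or_introl eq_refl)).
  assert (Hb := proj1 (Hin b) (or_intror (or_introl eq_refl))).
  assert (Hab : a <> b) by (intro; subst; inversion Hnd; subst; simpl in *; tauto).
  assert (Hj' := proj2 (Hin j) (conj Hj eq_refl)). simpl in Hj'.
  destruct (Nat.eqb_spec a j).
  - subst. repeat split; try tauto; try lia.
    intros k Hk HV. destruct (proj2 (Hin k) (conj Hk HV)) as [|[|[]]]; auto.
  - assert (b = j) by tauto. subst. repeat split; try tauto; try lia.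
    intros k Hk HV. destruct (proj2 (Hin k) (conj Hk HV)) as [|[|[]]]; auto.
Qed.

Lemma partner_lt j : j < 2 * N -> partner N V j < 2 * N.
Proof. intros Hj. apply (partner_spec j Hj). Qed.

Lemma partner_neq j : j < 2 * N -> partner N V j <> j.
Proof. intros Hj. apply (partner_spec j Hj). Qed.

Lemma partner_unique j k : j < 2 * N -> k < 2 * N -> V k = V j -> k = j \/ k = partner N V j.
Proof. intros Hj. apply (partner_spec j Hj). Qed.

Lemma partner_invol j : j < 2 * N -> partner N V (partner N V j) = j.
Proof.
  intros Hj. destruct (partner_spec j Hj) as [H1 [H2 [H3 _]]].
  destruct (partner_spec _ H1) as [_ [G2 [G3 G4]]].
  destruct (G4 j Hj (eq_sym H3)) as [E|E]; [congruence|auto].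
Qed.

Lemma next_end_lt j : j < 2 * N -> next_end N V j < 2 * N.
Proof. intros. apply partner_lt, other_end_lt, H. Qed.

Lemma iter_next_lt t j : j < 2 * N -> Nat.iter t (next_end N V) j < 2 * N.
Proof. induction t; simpl; auto. intros. apply next_end_lt; auto. Qed.

Lemma next_end_inj a b : a < 2 * N -> b < 2 * N -> next_end N V a = next_end N V b -> a = b.
Proof.
  intros Ha Hb E. unfold next_end in E.
  apply (f_equal (partner N V)) in E. rewrite !partner_invol in E by (apply other_end_lt; auto).
  rewrite <- (other_end_invol a), <- (other_end_invol b), E. reflexivity.
Qed.

Lemma iter_next_inj t a b : a < 2 * N -> b < 2 * N ->
  Nat.iter t (next_end N V) a = Nat.iter t (next_end N V) b -> a = b.
Proof.
  induction t; simpl; auto. intros Ha Hb E. apply next_end_inj in E; try apply iter_next_lt; auto.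
Qed.

(* walking backwards: the reversed walk is again a walk *)
Lemma iter_next_reverse m y : y < 2 * N ->
  Nat.iter m (next_end N V) (other_end (Nat.iter m (next_end N V) y)) = other_end y.
Proof.
  induction m; intros Hy; [reflexivity|].
  rewrite Nat.iter_succ_r, (Nat.iter_succ m).
  assert (Hrev : forall z, z < 2 * N -> next_end N V (other_end (next_end N V z)) = other_end z).
  { intros z Hz. unfold next_end at 1 2. rewrite other_end_invol, partner_invol
      by (apply other_end_lt; auto). reflexivity. }
  rewrite Hrev by (apply iter_next_lt; auto). apply IHm; auto.
Qed.

(* the walk never reaches the other end of its starting edge: the
   palindromic path would have to turn around on an edge or at a vertex *)
Lemma walk_no_reversal x k : x < 2 * N -> Nat.iter k (next_end N V) x <> other_end x.
Proof.
  intros Hx E.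
  assert (Hpal : forall i, i <= k ->
    Nat.iter i (next_end N V) x = other_end (Nat.iter (k - i) (next_end N V) x)).
  { intros i Hi. apply (iter_next_inj (k - i)); try apply iter_next_lt; auto.
    - apply other_end_lt, iter_next_lt; auto.
    - rewrite <- Nat.iter_add. replace (k - i + i) with k by lia. rewrite E.
      rewrite iter_next_reverse; auto. }
  destruct (Nat.Even_or_Odd k) as [[m Hm]|[m Hm]].
  - specialize (Hpal m ltac:(lia)). replace (k - m) with m in Hpal by lia.
    symmetry in Hpal. exact (other_end_neq _ Hpal).
  - specialize (Hpal (S m) ltac:(lia)). replace (k - S m) with m in Hpal by lia.
    rewrite Nat.iter_succ in Hpal. unfold next_end in Hpal.
    apply (partner_neq (other_end (Nat.iter m (next_end N V) x))); auto.
    apply other_end_lt, iter_next_lt; auto.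
Qed.

Hypothesis HN : 1 <= N.

(* [next_end] is a permutation of the endpoints, so the walk is periodic;
   we take its least period [P] *)
Lemma walk_period : exists P, 0 < P /\ walk N V P = 0 /\
  forall a b, a < P -> b < P -> walk N V a = walk N V b -> a = b.
Proof.
  assert (H0 : 0 < 2 * N) by lia.
  assert (Hsub : forall a b, a <= b -> walk N V a = walk N V b -> walk N V (b - a) = 0).
  { intros a b Hab E. unfold walk in *. replace b with (a + (b - a)) in E by lia.
    rewrite Nat.iter_add in E. symmetry. apply (iter_next_inj a); auto. apply iter_next_lt; lia. }
  assert (Hret : exists P, 0 < P /\ walk N V P = 0).
  { destruct (classic (exists a b, a < b /\ b < S (2 * N) /\ walk N V a = walk N V b))
      as [[a [b [Hab [Hb E]]]]|Hno].
    - exists (b - a). split; [lia|]. apply Hsub; auto; lia.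
    - exfalso. assert (Hnd : NoDup (map (walk N V) (seq 0 (S (2 * N))))).
      { apply nodup_map_seq. intros a b Ha Hb E.
        destruct (lt_eq_lt_dec a b) as [[|]|]; auto; exfalso; apply Hno; eauto. }
      assert (Hinc : incl (map (walk N V) (seq 0 (S (2 * N)))) (seq 0 (2 * N))).
      { intros y Hy. rewrite in_map_iff in Hy. destruct Hy as [t [<- _]].
        rewrite in_seq. pose proof (iter_next_lt t 0 H0). unfold walk. lia. }
      pose proof (NoDup_incl_length Hnd Hinc). rewrite length_map, !length_seq in H. lia. }
  destruct (exists_least _ Hret) as [P [[HP EP] Hmin]].
  exists P. repeat split; auto.
  assert (G : forall a b, a < b -> b < P -> walk N V a = walk N V b -> False).
  { intros a b Hab HbP E. apply (Hmin (b - a)); [lia|]. split; [lia|]. apply Hsub; auto; lia. }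
  intros a b Ha Hb E. destruct (lt_eq_lt_dec a b) as [[|]|]; auto; exfalso; eauto.
Qed.

Definition on_walk (y : nat) : Prop := exists t, walk N V t = y.

Lemma on_walk_lt y : on_walk y -> y < 2 * N.
Proof. intros [t <-]. apply iter_next_lt. lia. Qed.

Lemma on_walk_not_both x : x < 2 * N -> on_walk x -> on_walk (other_end x) -> False.
Proof.
  intros Hx [a Ea] [b Eb]. destruct (le_lt_dec a b).
  - apply (walk_no_reversal x (b - a) Hx). rewrite <- Eb, <- Ea. unfold walk.
    rewrite <- Nat.iter_add. f_equal. lia.
  - apply (walk_no_reversal (other_end x) (a - b) (other_end_lt _ _ Hx)).
    rewrite other_end_invol, <- Eb, <- Ea. unfold walk.
    rewrite <- Nat.iter_add. f_equal. lia.
Qed.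

Hypothesis Hconn : connected_graph N V.

Lemma on_walk_cover j : j < 2 * N -> on_walk j \/ on_walk (other_end j).
Proof.
  destruct walk_period as [P [HP [EP _]]].
  assert (Hprev : forall y, on_walk y -> exists z, on_walk z /\ next_end N V z = y).
  { intros y [t <-]. exists (walk N V (t + P - 1)). split; [eexists; eauto|].
    unfold walk. rewrite <- Nat.iter_succ. replace (S (t + P - 1)) with (t + P) by lia.
    rewrite Nat.iter_add. fold (walk N V P). rewrite EP. reflexivity. }
  intros Hj. pose proof (Hconn 0 j ltac:(lia) Hj) as Hc. apply clos_rt_rtn1 in Hc.
  revert Hj. induction Hc as [|y z Hyz Hc IH]; intros Hj.
  - left. exists 0. reflexivity.
  - destruct Hyz as [Hy [Hz [He|HV]]]; specialize (IH Hy).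
    + destruct (same_edge_cases y z He) as [E|E]; subst z; auto.
      rewrite other_end_invol. tauto.
    + destruct (partner_unique y z Hy Hz (eq_sym HV)) as [E|E]; subst z; auto.
      destruct IH as [IH|[t Et]].
      * (* [y] is entered from its partner, so the partner's other end was visited *)
        right. destruct (Hprev y IH) as [u [Hu Eu]]. unfold next_end in Eu.
        rewrite <- Eu, partner_invol by (apply other_end_lt, on_walk_lt; auto).
        rewrite other_end_invol. exact Hu.
      * left. exists (S t). unfold walk in *. rewrite Nat.iter_succ, Et.
        unfold next_end. rewrite other_end_invol. reflexivity.
Qed.

Lemma walk_period_edges : exists P, walk N V P = 0 /\
  (forall j, j < 2 * N -> exists t, t < P /\ (j = walk N V t \/ j = other_end (walk N V t))) /\
  (forall a b, a < P -> b < P -> ep_edge (walk N V a) = ep_edge (walk N V b) -> a = b).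
Proof.
  destruct walk_period as [P [HP [EP Hdist]]]. exists P.
  assert (Hred : forall y, on_walk y -> exists t, t < P /\ walk N V t = y).
  { intros y [t <-]. exists (t mod P). split; [apply Nat.mod_upper_bound; lia|].
    assert (Hmul : forall k, Nat.iter (P * k) (next_end N V) 0 = 0).
    { intros k; induction k as [|k IHk]; [rewrite Nat.mul_0_r; reflexivity|].
      replace (P * S k) with (P + P * k) by lia. rewrite Nat.iter_add, IHk. exact EP. }
    unfold walk. transitivity (Nat.iter (t mod P + P * (t / P)) (next_end N V) 0).
    - rewrite Nat.iter_add, Hmul. reflexivity.
    - f_equal. pose proof (Nat.div_mod_eq t P). lia. }
  repeat split; auto.
  - intros j Hj. destruct (on_walk_cover j Hj) as [Hc|Hc];
      destruct (Hred _ Hc) as [t [Ht Et]]; exists t; split; auto.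
    right. rewrite Et, other_end_invol. reflexivity.
  - intros a b Ha Hb E. destruct (same_edge_cases _ _ E) as [E'|E']; [apply Hdist; auto|].
    exfalso. apply (on_walk_not_both (walk N V a)); [apply iter_next_lt; lia|eexists; eauto|].
    rewrite <- E'. eexists; eauto.
Qed.

Lemma walk_structure : walk N V N = 0 /\
  (forall j, j < 2 * N -> exists t, t < N /\ (j = walk N V t \/ j = other_end (walk N V t))) /\
  (forall a b, a < N -> b < N -> ep_edge (walk N V a) = ep_edge (walk N V b) -> a = b).
Proof.
  destruct walk_period_edges as [P [EP [Hcov Hinj]]].
  assert (HPN : P = N).
  { apply Nat.le_antisymm.
    - (* the [P] edges visited are distinct *)
      assert (Hnd : NoDup (map (fun t => ep_edge (walk N V t)) (seq 0 P)))
        by (apply nodup_map_seq; auto).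
      assert (Hinc : incl (map (fun t => ep_edge (walk N V t)) (seq 0 P)) (seq 0 N)).
      { intros y Hy. rewrite in_map_iff in Hy. destruct Hy as [t [<- _]].
        rewrite in_seq. assert (H0 : 0 < 2 * N) by lia.
        pose proof (edge_lt N _ (iter_next_lt t 0 H0)). unfold walk. lia. }
      pose proof (NoDup_incl_length Hnd Hinc). rewrite length_map, !length_seq in H. auto.
    - (* every edge is visited *)
      assert (Hinc : incl (seq 0 N) (map (fun t => ep_edge (walk N V t)) (seq 0 P))).
      { intros n Hn. rewrite in_seq in Hn. rewrite in_map_iff.
        assert (Ee : ep_edge (2 * n) = n) by apply div2_double.
        destruct (Hcov (2 * n) ltac:(lia)) as [t [Ht [Et|Et]]]; exists t;
          rewrite in_seq; split; try lia.
        - rewrite <- Et. exact Ee.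
        - rewrite <- other_end_edge, <- Et. exact Ee. }
      pose proof (NoDup_incl_length (seq_NoDup N 0) Hinc). rewrite length_map, !length_seq in H.
      auto. }
  subst P. auto.
Qed.

End Walk.

(** ** Derivatives of real functions
   Coquelicot's differentiation rules, stated for functions [R -> R] so that
   they apply directly to goals written with [Rplus], [Rmult], ... *)

Lemma derive_eq (f : R -> R) (x l l' : R) : is_derive f x l -> l = l' -> is_derive f x l'.
Proof. intros H <-; auto. Qed.

Lemma derive_ext (f g : R -> R) (x l : R) :
  (forall t, f t = g t) -> is_derive f x l -> is_derive g x l.
Proof. intros H. apply is_derive_ext. auto. Qed.

Lemma derive_plus (f g : R -> R) (x df dg : R) : is_derive f x df -> is_derive g x dg ->
  is_derive (fun t => f t + g t) x (df + dg).
Proof. intros. apply (is_derive_plus f g x df dg); auto. Qed.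

Lemma derive_minus (f g : R -> R) (x df dg : R) : is_derive f x df -> is_derive g x dg ->
  is_derive (fun t => f t - g t) x (df - dg).
Proof. intros. apply (is_derive_minus f g x df dg); auto. Qed.

Lemma derive_scal (f : R -> R) (x k df : R) :
  is_derive f x df -> is_derive (fun t => k * f t) x (k * df).
Proof. apply is_derive_scal. Qed.

Lemma derive_mult (f g : R -> R) (x df dg : R) : is_derive f x df -> is_derive g x dg ->
  is_derive (fun t => f t * g t) x (df * g x + f x * dg).
Proof. intros. apply (is_derive_mult f g x df dg); auto. intros; apply Rmult_comm. Qed.

Lemma derive_const (k x : R) : is_derive (fun _ => k) x 0.
Proof. apply (is_derive_const k x). Qed.

Lemma derive_id (x : R) : is_derive (fun t : R => t) x 1.
Proof. apply (is_derive_id x). Qed.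

Lemma derive_affine (f : R -> R) (x a b df : R) :
  is_derive f (a * x + b) df -> is_derive (fun t => f (a * t + b)) x (a * df).
Proof.
  intros H. apply (is_derive_comp f (fun t => a * t + b) x df a); auto.
  eapply derive_eq. apply derive_plus. apply derive_scal, derive_id. apply derive_const. ring.
Qed.

Lemma derive_dilate (f : R -> R) (x k df : R) :
  is_derive f (k * x) df -> is_derive (fun t => f (k * t)) x (k * df).
Proof.
  intros H. apply (derive_ext (fun t => f (k * t + 0))); [intros; rewrite Rplus_0_r; auto|].
  apply derive_affine. rewrite Rplus_0_r. exact H.
Qed.

Lemma derivative_zero_const (F F' : R -> R) (a b : R) :
  (forall x, is_derive F x (F' x)) -> (forall x, a < x < b -> F' x = 0) ->
  forall x, a <= x <= b -> F x = F a.
Proof.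
  intros HF HF0.
  assert (pr : forall x, a < x < b -> derivable_pt F x).
  { intros x _. exists (F' x). apply is_derive_Reals, HF. }
  intros x Hx. apply (null_derivative_loc F a b pr); auto.
  - intros y _. apply derivable_continuous_pt. exists (F' y). apply is_derive_Reals, HF.
  - intros y P. destruct (pr y P) as [l Hl] eqn:E. simpl.
    assert (l = F' y) by (apply (uniqueness_limite F y); auto; apply is_derive_Reals, HF).
    rewrite H. apply HF0; auto.
Qed.

(** ** Uniqueness for [y'' = - lam * y]
   A solution on [a, b] with zero Cauchy data at some [c] in [a, b] vanishes:
   for [lam > 0] and [lam = 0] a conserved energy vanishes, for [lam < 0] the
   quantities [(y' +- r y) exp (-+ r x)], [r = sqrt (- lam)], are constant. *)

Section Uniqueness.
Variables (lam a b c : R) (h dh ddh : R -> R).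
Hypothesis Hc : a <= c <= b.
Hypothesis Hh : forall x, is_derive h x (dh x).
Hypothesis Hdh : forall x, is_derive dh x (ddh x).
Hypothesis Hode : forall x, a < x < b -> ddh x = - lam * h x.
Hypothesis H0 : h c = 0.
Hypothesis D0 : dh c = 0.

Lemma conserved_zero (F F' : R -> R) :
  (forall x, is_derive F x (F' x)) -> (forall x, a < x < b -> F' x = 0) -> F c = 0 ->
  forall x, a <= x <= b -> F x = 0.
Proof.
  intros HF HF' Fc x Hx. rewrite (derivative_zero_const F F' a b HF HF' x Hx).
  rewrite <- (derivative_zero_const F F' a b HF HF' c Hc). exact Fc.
Qed.

Lemma ode_zero_pos : 0 < lam -> forall x, a <= x <= b -> h x = 0 /\ dh x = 0.
Proof.
  intros Hpos x Hx.
  assert (HQ : dh x * dh x + lam * (h x * h x) = 0).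
  { apply (conserved_zero (fun x => dh x * dh x + lam * (h x * h x))
      (fun x => (ddh x * dh x + dh x * ddh x) + lam * (dh x * h x + h x * dh x))); auto.
    - intros y. apply (derive_plus (fun t => dh t * dh t) (fun t => lam * (h t * h t))).
      apply (derive_mult dh dh); auto. apply derive_scal. apply (derive_mult h h); auto.
    - intros y Hy. rewrite Hode by auto. ring.
    - rewrite H0, D0. ring. }
  assert (0 <= dh x * dh x) by nra. assert (0 <= lam * (h x * h x)) by (apply Rmult_le_pos; nra).
  assert (h x * h x = 0) by nra. split; nra.
Qed.

Lemma ode_zero_zero : lam = 0 -> forall x, a <= x <= b -> h x = 0 /\ dh x = 0.
Proof.
  intros Hz.
  assert (Hd : forall x, a <= x <= b -> dh x = 0).
  { intros x Hx. assert (dh x * dh x = 0); [|nra].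
    apply (conserved_zero (fun x => dh x * dh x) (fun x => ddh x * dh x + dh x * ddh x)); auto.
    - intros y. apply (derive_mult dh dh); auto.
    - intros y Hy. rewrite Hode, Hz by auto. ring.
    - rewrite D0. ring. }
  intros x Hx. split; auto. apply (conserved_zero h dh); auto. intros y Hy. apply Hd. lra.
Qed.

Lemma ode_zero_neg : lam < 0 -> forall x, a <= x <= b -> h x = 0 /\ dh x = 0.
Proof.
  intros Hneg x Hx. set (r := sqrt (- lam)).
  assert (Hr2 : r * r = - lam) by (apply sqrt_sqrt; lra).
  assert (HU : (dh x + r * h x) * exp (- r * x) = 0).
  { apply (conserved_zero (fun x => (dh x + r * h x) * exp (- r * x))
      (fun x => (ddh x + r * dh x) * exp (- r * x) + (dh x + r * h x) * (- r * exp (- r * x))));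
      auto.
    - intros y. apply (derive_mult (fun t => dh t + r * h t) (fun t => exp (- r * t))).
      + apply derive_plus; auto. apply derive_scal; auto.
      + eapply derive_eq. apply (derive_dilate exp y (- r)), is_derive_exp. ring.
    - intros y Hy. rewrite Hode by auto. rewrite <- Hr2. ring.
    - rewrite H0, D0. ring. }
  assert (HW : (dh x - r * h x) * exp (r * x) = 0).
  { apply (conserved_zero (fun x => (dh x - r * h x) * exp (r * x))
      (fun x => (ddh x - r * dh x) * exp (r * x) + (dh x - r * h x) * (r * exp (r * x)))); auto.
    - intros y. apply (derive_mult (fun t => dh t - r * h t) (fun t => exp (r * t))).
      + apply derive_minus; auto. apply derive_scal; auto.
      + eapply derive_eq. apply (derive_dilate exp y r), is_derive_exp. ring.
    - intros y Hy. rewrite Hode by auto. rewrite <- Hr2. ring.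
    - rewrite H0, D0. ring. }
  assert (Hr : 0 < r) by (apply sqrt_lt_R0; lra).
  pose proof (exp_pos (- r * x)). pose proof (exp_pos (r * x)).
  apply Rmult_integral in HU. apply Rmult_integral in HW.
  destruct HU as [HU|HU]; [|lra]. destruct HW as [HW|HW]; [|lra]. split; nra.
Qed.

End Uniqueness.

Lemma ode_agree lam (f df ddf g dg : R -> R) a b c :
  a <= c <= b ->
  (forall x, derivable_pt_lim f x (df x)) -> (forall x, derivable_pt_lim df x (ddf x)) ->
  (forall x, a < x < b -> - ddf x = lam * f x) ->
  (forall x, is_derive g x (dg x)) -> (forall x, is_derive dg x (- lam * g x)) ->
  f c = g c -> df c = dg c ->
  forall x, a <= x <= b -> f x = g x /\ df x = dg x.
Proof.
  intros Hc Hf Hdf Hode Hg Hdg E0 D0 x Hx.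
  assert (Hz : f x - g x = 0 /\ df x - dg x = 0).
  { assert (Hh : forall y, is_derive (fun t => f t - g t) y (df y - dg y))
      by (intros; apply derive_minus; auto; apply is_derive_Reals; auto).
    assert (Hdh : forall y, is_derive (fun t => df t - dg t) y (ddf y - - lam * g y))
      by (intros; apply derive_minus; auto; apply is_derive_Reals; auto).
    assert (Hode' : forall y, a < y < b -> ddf y - - lam * g y = - lam * (f y - g y))
      by (intros y Hy; specialize (Hode y Hy); lra).
    assert (E0' : f c - g c = 0) by lra. assert (D0' : df c - dg c = 0) by lra.
    destruct (Rtotal_order lam 0) as [Hl|[Hl|Hl]].
    - exact (ode_zero_neg lam a b c _ _ _ Hc Hh Hdh Hode' E0' D0' Hl x Hx).
    - exact (ode_zero_zero lam a b c _ _ _ Hc Hh Hdh Hode' E0' D0' Hl x Hx).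
    - exact (ode_zero_pos lam a b c _ _ _ Hc Hh Hdh Hode' E0' D0' Hl x Hx). }
  destruct Hz. split; lra.
Qed.

(** ** Fundamental solutions of [y'' = - lam y]
   [Cf lam] and [Sf lam] solve the equation with Cauchy data (1, 0) and (0, 1)
   at 0; [Phi lam A B] is the solution with data (A, B). *)

Definition Cf (lam s : R) : R :=
  if Rlt_dec 0 lam then cos (sqrt lam * s)
  else if Rlt_dec lam 0 then (exp (sqrt (- lam) * s) + exp (- sqrt (- lam) * s)) / 2
  else 1.

Definition Sf (lam s : R) : R :=
  if Rlt_dec 0 lam then sin (sqrt lam * s) / sqrt lam
  else if Rlt_dec lam 0
       then (exp (sqrt (- lam) * s) - exp (- sqrt (- lam) * s)) / (2 * sqrt (- lam))
  else s.

Lemma fund_deriv lam s :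
  is_derive (Cf lam) s (- lam * Sf lam s) /\ is_derive (Sf lam) s (Cf lam s).
Proof.
  unfold Cf, Sf. destruct (Rlt_dec 0 lam) as [Hp|Hp].
  - assert (Hr : 0 < sqrt lam) by (apply sqrt_lt_R0; lra).
    assert (Hr2 : sqrt lam * sqrt lam = lam) by (apply sqrt_sqrt; lra).
    split.
    + eapply derive_eq. apply (derive_dilate cos s (sqrt lam)), is_derive_cos.
      set (r := sqrt lam) in *. rewrite <- Hr2. field. lra.
    + eapply derive_eq.
      * apply (derive_ext (fun t => / sqrt lam * sin (sqrt lam * t))); [intros; unfold Rdiv; ring|].
        apply derive_scal, (derive_dilate sin s (sqrt lam)), is_derive_sin.
      * field. lra.
  - destruct (Rlt_dec lam 0) as [Hn|Hn].
    + set (r := sqrt (- lam)).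
      assert (Hr : 0 < r) by (apply sqrt_lt_R0; lra).
      assert (Hr2 : r * r = - lam) by (apply sqrt_sqrt; lra).
      split.
      * eapply derive_eq.
        -- apply (derive_ext (fun t => / 2 * (exp (r * t) + exp (- r * t))));
             [intros; unfold Rdiv; ring|].
           apply derive_scal, derive_plus; apply derive_dilate, is_derive_exp.
        -- rewrite <- Hr2. field. lra.
      * eapply derive_eq.
        -- apply (derive_ext (fun t => / (2 * r) * (exp (r * t) - exp (- r * t))));
             [intros; unfold Rdiv; ring|].
           apply derive_scal, derive_minus; apply derive_dilate, is_derive_exp.
        -- field. lra.
    + assert (lam = 0) by lra. subst. split.
      * eapply derive_eq. apply derive_const. ring.
      * apply derive_id.
Qed.

Lemma fund_0 lam : Cf lam 0 = 1 /\ Sf lam 0 = 0.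
Proof.
  unfold Cf, Sf. destruct (Rlt_dec 0 lam).
  - rewrite Rmult_0_r, cos_0, sin_0. split; [auto|unfold Rdiv; ring].
  - destruct (Rlt_dec lam 0); rewrite ?Rmult_0_r, ?exp_0; split; auto;
      try (unfold Rdiv; ring); field.
Qed.

Lemma fund_wronskian lam s : Cf lam s * Cf lam s + lam * (Sf lam s * Sf lam s) = 1.
Proof.
  unfold Cf, Sf. destruct (Rlt_dec 0 lam) as [Hp|Hp].
  - assert (Hr : 0 < sqrt lam) by (apply sqrt_lt_R0; lra).
    assert (Hr2 : sqrt lam * sqrt lam = lam) by (apply sqrt_sqrt; lra).
    pose proof (sin2_cos2 (sqrt lam * s)) as H. unfold Rsqr in H. rewrite <- H.
    set (w := sqrt lam) in *. rewrite <- Hr2. field. lra.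
  - destruct (Rlt_dec lam 0) as [Hn|Hn]; [|replace lam with 0 by lra; ring].
    set (r := sqrt (- lam)).
    assert (Hr : 0 < r) by (apply sqrt_lt_R0; lra).
    assert (Hr2 : r * r = - lam) by (apply sqrt_sqrt; lra).
    assert (Huv : exp (r * s) * exp (- r * s) = 1)
      by (rewrite <- exp_plus; replace (r * s + - r * s) with 0 by ring; apply exp_0).
    replace lam with (- (r * r)) by lra. rewrite <- Huv. field. lra.
Qed.

Lemma Cf_eq_1 lam s : 0 < s -> Cf lam s = 1 ->
  lam = 0 \/ (0 < lam /\ cos (sqrt lam * s) = 1).
Proof.
  intros Hs. unfold Cf. destruct (Rlt_dec 0 lam) as [Hp|Hp]; [right; auto|].
  destruct (Rlt_dec lam 0) as [Hn|Hn]; [|left; lra].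
  intros Hc. exfalso. set (r := sqrt (- lam)) in *.
  assert (Hr : 0 < r) by (apply sqrt_lt_R0; lra).
  assert (Hu : 1 < exp (r * s)) by (rewrite <- exp_0; apply exp_increasing; nra).
  assert (Huv : exp (r * s) * exp (- r * s) = 1)
    by (rewrite <- exp_plus; replace (r * s + - r * s) with 0 by ring; apply exp_0).
  nra.
Qed.

Lemma Sf_eq_0 lam s : 0 < s -> Sf lam s = 0 -> 0 < lam /\ sin (sqrt lam * s) = 0.
Proof.
  intros Hs. unfold Sf. destruct (Rlt_dec 0 lam) as [Hp|Hp].
  - intros H. split; auto.
    assert (Hr : 0 < sqrt lam) by (apply sqrt_lt_R0; lra).
    apply (Rmult_eq_reg_r (/ sqrt lam)); [|apply Rinv_neq_0_compat; lra].
    rewrite Rmult_0_l. exact H.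
  - destruct (Rlt_dec lam 0) as [Hn|Hn]; [|lra].
    intros H. exfalso. set (r := sqrt (- lam)) in *.
    assert (Hr : 0 < r) by (apply sqrt_lt_R0; lra).
    assert (exp (- r * s) < exp (r * s)) by (apply exp_increasing; nra).
    unfold Rdiv in H. apply Rmult_integral in H. destruct H as [H|H]; [lra|].
    apply Rinv_neq_0_compat in H; [auto|lra].
Qed.

Definition Phi (lam A B s : R) : R := A * Cf lam s + B * Sf lam s.
Definition dPhi (lam A B s : R) : R := A * (- lam * Sf lam s) + B * Cf lam s.

Lemma Phi_deriv lam A B s : is_derive (Phi lam A B) s (dPhi lam A B s) /\
  is_derive (dPhi lam A B) s (- lam * Phi lam A B s).
Proof.
  destruct (fund_deriv lam s) as [HC HS]. unfold Phi, dPhi. split.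
  - apply (derive_plus (fun t => A * Cf lam t) (fun t => B * Sf lam t)); apply derive_scal; auto.
  - eapply derive_eq.
    + apply (derive_plus (fun t => A * (- lam * Sf lam t)) (fun t => B * Cf lam t));
        apply derive_scal; [apply derive_scal|]; eauto.
    + ring.
Qed.

Lemma Phi_0 lam A B : Phi lam A B 0 = A /\ dPhi lam A B 0 = B.
Proof. destruct (fund_0 lam) as [C0 S0]. unfold Phi, dPhi. rewrite C0, S0. split; ring. Qed.

Lemma linear2_trivial a11 a12 a21 a22 A B :
  a11 * A + a12 * B = 0 -> a21 * A + a22 * B = 0 -> a11 * a22 - a12 * a21 <> 0 ->
  A = 0 /\ B = 0.
Proof.
  intros E1 E2 Hdet. split.
  - apply (Rmult_eq_reg_r (a11 * a22 - a12 * a21)); auto.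
    replace (A * (a11 * a22 - a12 * a21)) with (a22 * (a11 * A + a12 * B) - a12 * (a21 * A + a22 * B))
      by ring. rewrite E1, E2. ring.
  - apply (Rmult_eq_reg_r (a11 * a22 - a12 * a21)); auto.
    replace (B * (a11 * a22 - a12 * a21)) with (a11 * (a21 * A + a22 * B) - a21 * (a11 * A + a12 * B))
      by ring. rewrite E1, E2. ring.
Qed.

(* An [E]-periodic solution (value and derivative) is zero, or constant with
   [lam = 0], or [lam > 0] with [sqrt lam * E] a multiple of [2 PI]: the
   periodicity system has determinant [(C - 1)^2 + lam S^2 = 2 - 2 C]. *)
Lemma periodic_solution_cases lam A B E : 0 < E ->
  Phi lam A B E = Phi lam A B 0 -> dPhi lam A B E = dPhi lam A B 0 ->
  (A = 0 /\ B = 0) \/ (lam = 0 /\ B = 0) \/ (0 < lam /\ cos (sqrt lam * E) = 1).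
Proof.
  intros HE H1 H2. destruct (Phi_0 lam A B) as [P0 D0]. rewrite P0 in H1. rewrite D0 in H2.
  unfold Phi, dPhi in H1, H2. set (C := Cf lam E) in *. set (S := Sf lam E) in *.
  destruct (Req_dec C 1) as [HC|HC].
  - destruct (Cf_eq_1 lam E HE HC) as [Hl|Hl]; [right; left|right; right; exact Hl].
    split; auto. subst lam. unfold S, Sf in H1.
    destruct (Rlt_dec 0 0); [lra|]. destruct (Rlt_dec 0 0); [lra|].
    rewrite HC in H1. assert (B * E = 0) by lra. apply Rmult_integral in H. lra.
  - left. apply (linear2_trivial (C - 1) S (- lam * S) (C - 1)); try lra.
    pose proof (fund_wronskian lam E) as HW. fold C S in HW.
    intros Hdet. apply HC. nra.
Qed.

Lemma cos_period_Z x m : cos (x + 2 * IZR m * PI) = cos x.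
Proof.
  destruct (Z_le_gt_dec 0 m) as [Hm|Hm].
  - rewrite <- (Z2Nat.id m Hm), <- INR_IZR_INZ. apply cos_period.
  - replace m with (- Z.of_nat (Z.to_nat (- m)))%Z by lia.
    rewrite opp_IZR, <- INR_IZR_INZ.
    rewrite <- (cos_period (x + 2 * - INR (Z.to_nat (- m)) * PI) (Z.to_nat (- m))). f_equal. ring.
Qed.

Lemma sin_period_Z x m : sin (x + 2 * IZR m * PI) = sin x.
Proof.
  rewrite <- (cos_shift (x + 2 * IZR m * PI)), <- (cos_shift x).
  replace (PI / 2 - (x + 2 * IZR m * PI)) with ((PI / 2 - x) + 2 * IZR (- m) * PI)
    by (rewrite opp_IZR; ring).
  apply cos_period_Z.
Qed.

(* [cos x = 1] exactly at multiples of [2 PI]; proved via [cos x = 1 - 2 sin (x/2)^2] *)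
Lemma cos_eq_1_Z x : cos x = 1 -> exists m : Z, x = 2 * IZR m * PI.
Proof.
  intros Hc. assert (Hs : sin (x / 2) = 0).
  { pose proof (cos_2a_sin (x / 2)) as H. replace (2 * (x / 2)) with x in H by field. nra. }
  destruct (sin_eq_0_0 _ Hs) as [m Hm]. exists m. lra.
Qed.

Lemma sin_nat_PI (m : nat) : sin (INR m * PI) = 0.
Proof. apply sin_eq_0_1. exists (Z.of_nat m). apply f_equal2; auto. apply INR_IZR_INZ. Qed.

Lemma is_RInt_ext_on (f g : R -> R) (a b l : R) :
  (forall x, a <= x <= b -> f x = g x) -> a <= b -> is_RInt f a b l -> is_RInt g a b l.
Proof.
  intros H Hab. apply is_RInt_ext. intros x Hx. rewrite Rmin_left, Rmax_right in Hx by lra.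
  apply H; lra.
Qed.

Lemma is_RInt_eq (f : R -> R) (a b l l' : R) : is_RInt f a b l -> l = l' -> is_RInt f a b l'.
Proof. intros H <-; auto. Qed.

Lemma is_RInt_unique_R (f : R -> R) (a b l l' : R) : is_RInt f a b l -> is_RInt f a b l' -> l = l'.
Proof.
  intros H1 H2. pose proof (is_RInt_unique (V := R_CompleteNormedModule) f a b l H1).
  pose proof (is_RInt_unique (V := R_CompleteNormedModule) f a b l' H2). congruence.
Qed.

Lemma is_RInt_plus_R (f g : R -> R) (a b lf lg : R) : is_RInt f a b lf -> is_RInt g a b lg ->
  is_RInt (fun x => f x + g x) a b (lf + lg).
Proof. intros. apply (is_RInt_plus f g a b lf lg); auto. Qed.

Lemma is_RInt_scal_R (f : R -> R) (a b k l : R) :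
  is_RInt f a b l -> is_RInt (fun x => k * f x) a b (k * l).
Proof. intros. apply (is_RInt_scal f a b k l); auto. Qed.

Lemma is_RInt_const_R (a b k : R) : is_RInt (fun _ => k) a b ((b - a) * k).
Proof. apply (is_RInt_const a b k). Qed.

Lemma is_RInt_rsum (g : nat -> R -> R) (I : nat -> R) (a b : R) k :
  (forall i, (i < k)%nat -> is_RInt (g i) a b (I i)) ->
  is_RInt (fun x => rsum k (fun i => g i x)) a b (rsum k I).
Proof.
  induction k; intros H; simpl.
  - eapply is_RInt_eq. apply is_RInt_const_R. ring.
  - apply (is_RInt_plus_R (fun x => rsum k (fun i => g i x)) (g k)); auto.
Qed.

Lemma vanishing_combination_test (u : nat -> R -> R) (w : R -> R) (g c : nat -> R) K T :
  0 <= T -> (forall i, (i < K)%nat -> is_RInt (fun s => u i s * w s) 0 T (g i)) ->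
  (forall s, 0 <= s <= T -> rsum K (fun i => c i * u i s) = 0) ->
  rsum K (fun i => c i * g i) = 0.
Proof.
  intros HT Hint Hz.
  assert (I1 : is_RInt (fun s => rsum K (fun i => c i * (u i s * w s))) 0 T
                 (rsum K (fun i => c i * g i))).
  { apply is_RInt_rsum. intros i Hi. apply is_RInt_scal_R. auto. }
  assert (I2 : is_RInt (fun s => rsum K (fun i => c i * (u i s * w s))) 0 T 0).
  { eapply is_RInt_ext_on; [|exact HT|eapply is_RInt_eq; [apply (is_RInt_const_R 0 T 0)|ring]].
    intros s Hs. rewrite (rsum_ext K _ (fun i => c i * u i s * w s)) by (intros; ring).
    rewrite <- rsum_mult_r, Hz by auto. ring. }
  exact (is_RInt_unique_R _ _ _ _ _ I1 I2).
Qed.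

Lemma int_cos_affine (T a phi : R) : 0 < T -> a <> 0 ->
  is_RInt (fun s => cos (a * s - phi)) 0 T ((sin (a * T - phi) + sin phi) / a).
Proof.
  intros HT Ha. eapply is_RInt_eq.
  - apply (is_RInt_derive (fun s => sin (a * s - phi) / a)).
    + intros x _. eapply derive_eq.
      * apply (derive_ext (fun s => / a * sin (a * s + - phi))); [intros; unfold Rdiv, Rminus; ring|].
        apply derive_scal, (derive_affine sin x a (- phi)), is_derive_sin.
      * unfold Rminus. field. auto.
    + intros x _. apply continuity_pt_filterlim. reg.
  - simpl. unfold minus, plus, opp; simpl. rewrite Rmult_0_r.
    replace (0 - phi) with (- phi) by ring. rewrite sin_antisym. field. auto.
Qed.

Lemma int_cos_multiple (T : R) (q : Z) (phi : R) : 0 < T -> (Z.even q = true \/ phi = 0) ->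
  is_RInt (fun s => cos (IZR q * PI / T * s - phi)) 0 T (if Z.eqb q 0 then T * cos phi else 0).
Proof.
  intros HT Hq. assert (HP := PI_RGT_0). destruct (Z.eqb_spec q 0) as [->|Hq0].
  - eapply is_RInt_ext_on; [|lra|eapply is_RInt_eq; [apply (is_RInt_const_R 0 T (cos phi))|ring]].
    intros x _. replace (IZR 0 * PI / T * x - phi) with (- phi) by (simpl; field; lra).
    rewrite cos_neg. reflexivity.
  - assert (Ha : IZR q * PI / T <> 0).
    { assert (IZR q <> 0) by (apply not_0_IZR; auto).
      unfold Rdiv. apply Rmult_integral_contrapositive. split; [|apply Rinv_neq_0_compat; lra].
      apply Rmult_integral_contrapositive. split; lra. }
    eapply is_RInt_eq; [apply (int_cos_affine T _ phi HT Ha)|].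
    replace (IZR q * PI / T * T - phi) with (IZR q * PI - phi) by (field; lra).
    assert (Hs : sin (IZR q * PI - phi) = - sin phi).
    { destruct Hq as [Hq| ->].
      - apply Zeven_bool_iff, Zeven_ex in Hq. destruct Hq as [m ->].
        replace (IZR (2 * m) * PI - phi) with (- phi + 2 * IZR m * PI) by (rewrite mult_IZR; ring).
        rewrite sin_period_Z. apply sin_antisym.
      - rewrite Rminus_0_r, sin_0, Ropp_0. apply sin_eq_0_1. eauto. }
    rewrite Hs. unfold Rdiv. ring.
Qed.

Lemma int_cos_cos (T : R) (p r : nat) (phi psi : R) : 0 < T ->
  is_RInt (fun s => cos (2 * PI * INR p / T * s - phi) * cos (2 * PI * INR r / T * s - psi)) 0 T
    (((if Nat.eqb p r then T * cos (phi - psi) else 0) +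
      (if Nat.eqb (p + r) 0 then T * cos (phi + psi) else 0)) / 2).
Proof.
  intros HT.
  pose proof (int_cos_multiple T (2 * (Z.of_nat p - Z.of_nat r)) (phi - psi) HT
                (or_introl (Z.even_mul _ _))) as I1.
  pose proof (int_cos_multiple T (2 * (Z.of_nat p + Z.of_nat r)) (phi + psi) HT
                (or_introl (Z.even_mul _ _))) as I2.
  pose proof (is_RInt_scal_R _ 0 T (/ 2) _ (is_RInt_plus_R _ _ 0 T _ _ I1 I2)) as I3.
  eapply is_RInt_ext_on; [| lra | eapply is_RInt_eq; [exact I3|]].
  - intros x _. cbv beta.
    rewrite !mult_IZR, minus_IZR, plus_IZR, <- !INR_IZR_INZ.
    replace (2 * (INR p - INR r) * PI / T * x - (phi - psi))
      with ((2 * PI * INR p / T * x - phi) - (2 * PI * INR r / T * x - psi)) by (field; lra).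
    replace (2 * (INR p + INR r) * PI / T * x - (phi + psi))
      with ((2 * PI * INR p / T * x - phi) + (2 * PI * INR r / T * x - psi)) by (field; lra).
    rewrite cos_minus, cos_plus. field.
  - replace (Z.eqb (2 * (Z.of_nat p - Z.of_nat r)) 0) with (Nat.eqb p r).
    2: { destruct (Nat.eqb_spec p r); destruct (Z.eqb_spec (2 * (Z.of_nat p - Z.of_nat r)) 0);
         auto; lia. }
    replace (Z.eqb (2 * (Z.of_nat p + Z.of_nat r)) 0) with (Nat.eqb (p + r) 0).
    2: { destruct (Nat.eqb_spec (p + r) 0); destruct (Z.eqb_spec (2 * (Z.of_nat p + Z.of_nat r)) 0);
         auto; lia. }
    unfold Rdiv. apply Rmult_comm.
Qed.

Lemma int_sin_sin (T : R) (a b : nat) : 0 < T -> (1 <= a)%nat -> (1 <= b)%nat ->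
  is_RInt (fun x => sin (INR a * PI / T * x) * sin (INR b * PI / T * x)) 0 T
    (if Nat.eqb a b then T / 2 else 0).
Proof.
  intros HT Ha Hb.
  pose proof (int_cos_multiple T (Z.of_nat a - Z.of_nat b) 0 HT (or_intror eq_refl)) as I1.
  pose proof (int_cos_multiple T (Z.of_nat a + Z.of_nat b) 0 HT (or_intror eq_refl)) as I2.
  pose proof (is_RInt_scal_R _ 0 T (/ 2) _
                (is_RInt_plus_R _ _ 0 T _ _ I1 (is_RInt_scal_R _ 0 T (-1) _ I2))) as I3.
  eapply is_RInt_ext_on; [| lra | eapply is_RInt_eq; [exact I3|]].
  - intros x _. cbv beta. rewrite minus_IZR, plus_IZR, <- !INR_IZR_INZ, !Rminus_0_r.
    replace ((INR a - INR b) * PI / T * x)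
      with (INR a * PI / T * x - INR b * PI / T * x) by (field; lra).
    replace ((INR a + INR b) * PI / T * x)
      with (INR a * PI / T * x + INR b * PI / T * x) by (field; lra).
    rewrite cos_minus, cos_plus. field.
  - replace (Z.eqb (Z.of_nat a + Z.of_nat b) 0) with false
      by (symmetry; apply Z.eqb_neq; lia).
    rewrite cos_0. destruct (Nat.eqb_spec a b) as [->|Hab].
    + rewrite Z.sub_diag. simpl. field.
    + replace (Z.eqb (Z.of_nat a - Z.of_nat b) 0) with false
        by (symmetry; apply Z.eqb_neq; lia). field.
Qed.

(** ** The trigonometric basis of a circle of length [E]
   [Bs E i], [i = 0, 1, 2, ...], enumerates [1, cos (2 PI s / E),
   sin (2 PI s / E), cos (4 PI s / E), sin (4 PI s / E), ...]: the frequency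
   index of [Bs E i] is [(i + 1) / 2] and its phase is [PI / 2] (a sine)
   for even [i > 0]. *)

Definition freq_index (i : nat) : nat := Nat.div (S i) 2.
Definition phase (i : nat) : R := if andb (Nat.even i) (negb (Nat.eqb i 0)) then PI / 2 else 0.
Definition kap (E : R) (i : nat) : R := 2 * PI * INR (freq_index i) / E.
Definition Bs (E : R) (i : nat) (s : R) : R := cos (kap E i * s - phase i).
Definition dBs (E : R) (i : nat) (s : R) : R := - kap E i * sin (kap E i * s - phase i).

Lemma freq_index_even a : freq_index (2 * a) = a.
Proof. unfold freq_index. replace (S (2 * a)) with (2 * a + 1)%nat by lia. apply div2_double_succ. Qed.

Lemma freq_index_odd a : freq_index (2 * a + 1) = S a.
Proof. unfold freq_index. replace (S (2 * a + 1)) with (2 * S a)%nat by lia. apply div2_double. Qed.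

Lemma phase_even a : phase (2 * a) = if Nat.eqb a 0 then 0 else PI / 2.
Proof.
  unfold phase. rewrite even_double.
  destruct (Nat.eqb_spec a 0); destruct (Nat.eqb_spec (2 * a) 0); simpl; auto; lia.
Qed.

Lemma phase_odd a : phase (2 * a + 1) = 0.
Proof. unfold phase. rewrite even_double_succ. reflexivity. Qed.

Lemma Bs_deriv E i s : is_derive (Bs E i) s (dBs E i s) /\
  is_derive (dBs E i) s (- (kap E i * kap E i) * Bs E i s).
Proof.
  unfold Bs, dBs. split.
  - eapply derive_eq.
    + apply (derive_ext (fun s => cos (kap E i * s + - phase i))); [intros; f_equal|].
      apply (derive_affine cos s (kap E i) (- phase i)), is_derive_cos.
    + unfold Rminus. ring.
  - eapply derive_eq.
    + apply derive_scal.
      apply (derive_ext (fun s => sin (kap E i * s + - phase i))); [intros; f_equal|].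
      apply (derive_affine sin s (kap E i) (- phase i)), is_derive_sin.
    + unfold Rminus. ring.
Qed.

Lemma Bs_periodic E i : 0 < E -> Bs E i E = Bs E i 0 /\ dBs E i E = dBs E i 0.
Proof.
  intros HE. unfold Bs, dBs, kap. rewrite Rmult_0_r.
  replace (2 * PI * INR (freq_index i) / E * E - phase i)
    with ((0 - phase i) + 2 * INR (freq_index i) * PI) by (field; lra).
  rewrite cos_period, sin_period. auto.
Qed.

Lemma Bs_const E s : 0 < E -> Bs E 0 s = 1.
Proof.
  intros HE. unfold Bs, kap, phase, freq_index. simpl.
  replace (2 * PI * 0 / E * s - 0) with 0 by (field; lra). apply cos_0.
Qed.

(* two distinct basis functions with the same frequency are a cosine and a sine *)
Lemma freq_index_eq_phase i m : i <> m -> freq_index i = freq_index m ->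
  cos (phase i - phase m) = 0.
Proof.
  intros Hne Hk.
  destruct (even_odd_cases i) as [[a ->]|[a ->]]; destruct (even_odd_cases m) as [[b ->]|[b ->]];
    rewrite ?freq_index_even, ?freq_index_odd in Hk; try lia;
    rewrite ?phase_even, ?phase_odd.
  - replace (a =? 0)%nat with false by (symmetry; apply Nat.eqb_neq; lia).
    rewrite Rminus_0_r. apply cos_PI2.
  - replace (b =? 0)%nat with false by (symmetry; apply Nat.eqb_neq; lia).
    rewrite Rminus_0_l, cos_neg. apply cos_PI2.
Qed.

Lemma freq_index_zero i : freq_index i = 0%nat -> i = 0%nat.
Proof.
  destruct (even_odd_cases i) as [[a ->]|[a ->]]; rewrite ?freq_index_even, ?freq_index_odd; lia.
Qed.

Lemma Bs_gram E i m : 0 < E ->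
  is_RInt (fun s => Bs E i s * Bs E m s) 0 E
    (if Nat.eqb i m then (if Nat.eqb i 0 then E else E / 2) else 0).
Proof.
  intros HE. eapply is_RInt_eq.
  - apply (int_cos_cos E (freq_index i) (freq_index m) (phase i) (phase m) HE).
  - destruct (Nat.eqb_spec i m) as [<-|Hne].
    + rewrite Nat.eqb_refl, Rminus_diag, cos_0.
      destruct (Nat.eqb_spec i 0) as [->|Hi0].
      * unfold phase, freq_index. simpl. rewrite Rplus_0_r, cos_0. field.
      * replace (freq_index i + freq_index i =? 0)%nat with false.
        -- field.
        -- symmetry. apply Nat.eqb_neq. intro H. apply Hi0, freq_index_zero. lia.
    + replace (freq_index i + freq_index m =? 0)%nat with false.
      * destruct (Nat.eqb_spec (freq_index i) (freq_index m)) as [Hk|Hk]; [|field].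
        rewrite freq_index_eq_phase by auto. field.
      * symmetry. apply Nat.eqb_neq. intro H. apply Hne.
        rewrite (freq_index_zero i), (freq_index_zero m); lia.
Qed.

Lemma Bs_independent E K (c : nat -> R) : 0 < E ->
  (forall s, 0 <= s <= E -> rsum K (fun i => c i * Bs E i s) = 0) ->
  forall m, (m < K)%nat -> c m = 0.
Proof.
  intros HE Hz m Hm.
  set (G := fun i => if Nat.eqb i m then (if Nat.eqb i 0 then E else E / 2) else 0).
  pose proof (vanishing_combination_test (Bs E) (Bs E m) G c K E ltac:(lra)
                (fun i _ => Bs_gram E i m HE) Hz) as H.
  rewrite (rsum_ext K _ (fun i => if Nat.eqb i m then c i * G i else 0)) in H.
  - rewrite rsum_single in H by auto. unfold G in H. rewrite Nat.eqb_refl in H.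
    destruct (Nat.eqb m 0); apply Rmult_integral in H; destruct H; auto; lra.
  - intros i Hi. unfold G. destruct (Nat.eqb_spec i m); [auto|ring].
Qed.

Lemma sines_independent T K (d : nat -> R) (mm : nat -> nat) : 0 < T ->
  (forall i, (i < K)%nat -> (1 <= mm i)%nat) ->
  (forall x, 0 <= x <= T -> rsum K (fun i => d i * sin (INR (mm i) * PI / T * x)) = 0) ->
  forall m0, (1 <= m0)%nat -> rsum K (fun i => if Nat.eqb (mm i) m0 then d i else 0) = 0.
Proof.
  intros HT Hmm Hz m0 Hm0.
  pose proof (vanishing_combination_test (fun i x => sin (INR (mm i) * PI / T * x))
                (fun x => sin (INR m0 * PI / T * x))
                (fun i => if Nat.eqb (mm i) m0 then T / 2 else 0) d K T ltac:(lra)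
                (fun i Hi => int_sin_sin T (mm i) m0 HT (Hmm i Hi) Hm0) Hz) as H.
  rewrite (rsum_ext K _ (fun i => T / 2 * (if Nat.eqb (mm i) m0 then d i else 0))) in H.
  - rewrite rsum_scal in H. apply Rmult_integral in H. destruct H; auto. lra.
  - intros i Hi. destruct (Nat.eqb (mm i) m0); ring.
Qed.

(** ** The cycle unrolled onto a circle
   Step [t] of the Euler walk runs along edge [step_edge t], of length
   [step_len t], from local coordinate [start_pos t] to [end_pos t] in
   direction [dir t]; it starts at arclength [arc t].  The point with local
   coordinate [x] of that edge has arclength [coord t x].  A function [Phi]
   on the circle of length [Etot] is carried to the graph by [transport]. *)

Section Unrolling.
Variables (N : nat) (ell : nat -> nat) (V : nat -> nat).
Let Lg := fun n => INR (ell n).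

Definition step_start (t : nat) : nat := walk N V t.
Definition step_edge (t : nat) : nat := ep_edge (step_start t).
Definition step_len (t : nat) : R := INR (ell (step_edge t)).
Definition arc (t : nat) : R := INR (tot_len t (fun u => ell (step_edge u))).
Definition dir (t : nat) : R := if Nat.even (step_start t) then 1 else -1.
Definition start_pos (t : nat) : R := if Nat.even (step_start t) then 0 else step_len t.
Definition end_pos (t : nat) : R := if Nat.even (step_start t) then step_len t else 0.
Definition coord (t : nat) (x : R) : R := arc t + dir t * (x - start_pos t).
Definition Etot : R := INR (tot_len N ell).
Definition step_of_edge (n : nat) : nat := find_last (fun t => Nat.eqb (step_edge t) n) N.

Definition transport (Phi : R -> R) (n : nat) (x : R) : R := Phi (coord (step_of_edge n) x).
Definition dtransport (dPhi : R -> R) (n : nat) (x : R) : R :=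
  dir (step_of_edge n) * dPhi (coord (step_of_edge n) x).

Lemma arc_0 : arc 0 = 0.
Proof. reflexivity. Qed.

Lemma arc_S t : arc (S t) = arc t + step_len t.
Proof. unfold arc, step_len. simpl. rewrite plus_INR. reflexivity. Qed.

Lemma arc_mono t1 t2 : (t1 <= t2)%nat -> arc t1 <= arc t2.
Proof. unfold arc. intros. apply le_INR. induction H; simpl; lia. Qed.

Lemma dir_sq t : dir t * dir t = 1.
Proof. unfold dir. destruct (Nat.even (step_start t)); ring. Qed.

Lemma start_end_pos t : 0 <= start_pos t <= step_len t /\ 0 <= end_pos t <= step_len t.
Proof.
  assert (0 <= step_len t) by apply pos_INR.
  unfold start_pos, end_pos. destruct (Nat.even (step_start t)); lra.
Qed.

Lemma coord_start t : coord t (start_pos t) = arc t.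
Proof. unfold coord. ring. Qed.

Lemma coord_end t : coord t (end_pos t) = arc (S t).
Proof.
  rewrite arc_S. unfold coord, dir, end_pos, start_pos. destruct (Nat.even (step_start t)); ring.
Qed.

Lemma step_boundary (f df : nat -> R -> R) t :
  bval Lg f (step_start t) = f (step_edge t) (start_pos t) /\
  bder Lg df (step_start t) = dir t * df (step_edge t) (start_pos t) /\
  bval Lg f (other_end (step_start t)) = f (step_edge t) (end_pos t) /\
  bder Lg df (other_end (step_start t)) = - dir t * df (step_edge t) (end_pos t).
Proof.
  unfold bval, bder, ep_pos, start_pos, end_pos, dir, step_len, step_edge, Lg, ep_edge.
  destruct (even_odd_cases (step_start t)) as [[q ->]|[q ->]]; unfold other_end.
  - rewrite even_double. replace (S (2 * q)) with (2 * q + 1)%nat by lia.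
    rewrite even_double_succ, div2_double, div2_double_succ. cbv iota. repeat split; ring.
  - rewrite even_double_succ. replace (pred (2 * q + 1)) with (2 * q)%nat by lia.
    rewrite even_double, div2_double, div2_double_succ. cbv iota. repeat split; ring.
Qed.

Definition follows (f df : nat -> R -> R) (Phi dPhi : R -> R) (t : nat) : Prop :=
  forall x, 0 <= x <= step_len t ->
    f (step_edge t) x = Phi (coord t x) /\ df (step_edge t) x = dir t * dPhi (coord t x).

Lemma follows_boundary f df Phi dPhi t : follows f df Phi dPhi t ->
  bval Lg f (step_start t) = Phi (arc t) /\ bder Lg df (step_start t) = dPhi (arc t) /\
  bval Lg f (other_end (step_start t)) = Phi (arc (S t)) /\
  bder Lg df (other_end (step_start t)) = - dPhi (arc (S t)).
Proof.
  intros HM. destruct (step_boundary f df t) as [E1 [E2 [E3 E4]]].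
  destruct (start_end_pos t) as [X1 X2].
  destruct (HM _ X1) as [M1 M2]. destruct (HM _ X2) as [M3 M4].
  rewrite E1, E2, E3, E4, M1, M2, M3, M4, coord_start, coord_end.
  unfold dir. destruct (Nat.even (step_start t)); repeat split; ring.
Qed.

Lemma derive_coord (Phi dPhi : R -> R) t x : (forall y, is_derive Phi y (dPhi y)) ->
  is_derive (fun x => Phi (coord t x)) x (dir t * dPhi (coord t x)).
Proof.
  intros H. unfold coord.
  apply (derive_ext (fun x => Phi (dir t * x + (arc t - dir t * start_pos t)))).
  - intros; f_equal; ring.
  - apply derive_affine. replace (dir t * x + (arc t - dir t * start_pos t))
      with (arc t + dir t * (x - start_pos t)) by ring. apply H.
Qed.

Hypothesis Hcyc : cycle_graph N V.
Let HN : (1 <= N)%nat := proj1 Hcyc.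
Let Hconn : connected_graph N V := proj1 (proj2 Hcyc).
Let Hdeg : forall j, (j < 2 * N)%nat -> degree N V j = 2%nat := proj2 (proj2 Hcyc).

Lemma step_start_lt t : (step_start t < 2 * N)%nat.
Proof. apply (iter_next_lt N V Hdeg). lia. Qed.

Lemma walk_closes : step_start N = 0%nat.
Proof. apply (proj1 (walk_structure N V Hdeg HN Hconn)). Qed.

Lemma step_start_S t : step_start (S t) = partner N V (other_end (step_start t)).
Proof. unfold step_start, walk. rewrite Nat.iter_succ. reflexivity. Qed.

Lemma step_edge_lt t : (step_edge t < N)%nat.
Proof. apply edge_lt, step_start_lt. Qed.

Lemma step_edge_inj t1 t2 : (t1 < N)%nat -> (t2 < N)%nat -> step_edge t1 = step_edge t2 -> t1 = t2.
Proof. apply (proj2 (proj2 (walk_structure N V Hdeg HN Hconn))). Qed.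

Lemma step_edge_surj n : (n < N)%nat -> exists t, (t < N)%nat /\ step_edge t = n.
Proof.
  intros Hn. destruct (proj1 (proj2 (walk_structure N V Hdeg HN Hconn)) (2 * n)%nat ltac:(lia))
    as [t [Ht E]].
  exists t. split; auto. unfold step_edge, step_start.
  destruct E as [E|E]; [rewrite <- E|rewrite <- other_end_edge, <- E]; apply div2_double.
Qed.

Lemma step_of_edge_spec n : (n < N)%nat -> (step_of_edge n < N)%nat /\ step_edge (step_of_edge n) = n.
Proof.
  intros Hn. destruct (find_last_spec (fun t => Nat.eqb (step_edge t) n) N) as [H1 H2].
  - destruct (step_edge_surj n Hn) as [t [Ht Et]]. exists t. split; auto. apply Nat.eqb_eq; auto.
  - split; auto. apply Nat.eqb_eq; auto.
Qed.

Lemma step_of_edge_edge t : (t < N)%nat -> step_of_edge (step_edge t) = t.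
Proof.
  intros Ht. destruct (step_of_edge_spec (step_edge t) (step_edge_lt t)) as [H1 H2].
  apply step_edge_inj; auto.
Qed.



(* the walk traverses every edge once, so its total length is [Etot] *)
Lemma arc_N : arc N = Etot.
Proof.
  unfold arc, Etot. f_equal. rewrite !tot_len_list.
  replace (map (fun u => ell (step_edge u)) (seq 0 N)) with (map ell (map step_edge (seq 0 N)))
    by (rewrite map_map; auto).
  apply Permutation_list_sum, Permutation_map, NoDup_Permutation.
  - apply nodup_map_seq. intros; apply step_edge_inj; auto.
  - apply seq_NoDup.
  - intros n. rewrite in_map_iff, in_seq. split.
    + intros [t [<- _]]. pose proof (step_edge_lt t). lia.
    + intros [_ Hn]. destruct (step_edge_surj n Hn) as [t [Ht Et]].
      exists t. rewrite in_seq. split; auto; lia.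
Qed.







Lemma vertex_between_steps j : (j < 2 * N)%nat -> exists t, (t < N)%nat /\
  ((j = other_end (step_start t) /\ partner N V j = step_start (S t)) \/
   (j = step_start (S t) /\ partner N V j = other_end (step_start t))).
Proof.
  intros Hj.
  assert (Hback : forall t, partner N V (step_start (S t)) = other_end (step_start t)).
  { intros t. rewrite step_start_S. apply (partner_invol N V Hdeg), other_end_lt, step_start_lt. }
  destruct (proj1 (proj2 (walk_structure N V Hdeg HN Hconn)) j Hj) as [t' [Ht' [E|E]]];
    fold (step_start t') in E.
  - destruct t' as [|t].
    + exists (N - 1)%nat. split; [lia|]. right.
      assert (HwS : step_start (S (N - 1)) = step_start 0).
      { replace (S (N - 1)) with N by lia. rewrite walk_closes. reflexivity. }
      split; [rewrite HwS; auto|]. rewrite E, <- HwS. apply Hback.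
    + exists t. split; [lia|]. right. split; auto. subst. apply Hback.
  - exists t'. split; auto. left. split; auto. subst. rewrite step_start_S. reflexivity.
Qed.

Lemma vertex_sum (g : nat -> R) j : (j < 2 * N)%nat ->
  rsum (2 * N) (fun k => if Nat.eqb (V k) (V j) then g k else 0) = g j + g (partner N V j).
Proof.
  intros Hj. destruct (partner_spec N V Hdeg j Hj) as [P1 [P2 [P3 P4]]].
  apply rsum_pair; auto.
  intros k Hk. rewrite Nat.eqb_eq. split; [apply P4; auto|].
  intros [E|E]; subst k; auto.
Qed.


Lemma standard_of_follows f df Phi dPhi :
  (forall t, (t < N)%nat -> follows f df Phi dPhi t) ->
  Phi Etot = Phi 0 -> dPhi Etot = dPhi 0 -> standard_cond N Lg V f df.
Proof.
  intros HM HP HdP.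
  assert (Hnext : forall t, (t < N)%nat ->
    bval Lg f (step_start (S t)) = Phi (arc (S t)) /\
    bder Lg df (step_start (S t)) = dPhi (arc (S t))).
  { intros t Ht. destruct (Nat.eq_dec (S t) N) as [E|E].
    - rewrite E, walk_closes, arc_N, HP, HdP, <- arc_0.
      destruct (follows_boundary f df Phi dPhi 0 (HM 0%nat ltac:(lia))) as [A [B _]]. auto.
    - destruct (follows_boundary f df Phi dPhi (S t) (HM (S t) ltac:(lia))) as [A [B _]]. auto. }
  assert (Hpv : forall j, (j < 2 * N)%nat ->
    bval Lg f (partner N V j) = bval Lg f j /\ bder Lg df (partner N V j) = - bder Lg df j).
  { intros j Hj. destruct (vertex_between_steps j Hj) as [t [Ht [[E1 E2]|[E1 E2]]]];
      rewrite E2, E1;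
      destruct (follows_boundary f df Phi dPhi t (HM t Ht)) as [_ [_ [A B]]];
      destruct (Hnext t Ht) as [C D]; rewrite A, B, C, D; split; ring. }
  split.
  - intros j k Hj Hk HV. destruct (partner_unique N V Hdeg j k Hj Hk (eq_sym HV)) as [E|E];
      subst k; auto. symmetry. apply Hpv; auto.
  - intros j Hj. rewrite vertex_sum, (proj2 (Hpv j Hj)) by auto. ring.
Qed.

Lemma standard_partner f df : standard_cond N Lg V f df -> forall j, (j < 2 * N)%nat ->
  bval Lg f (partner N V j) = bval Lg f j /\ bder Lg df (partner N V j) = - bder Lg df j.
Proof.
  intros [Hc Hk] j Hj. split.
  - apply Hc; [apply (partner_lt N V Hdeg) | | apply (partner_spec N V Hdeg)]; auto.
  - specialize (Hk j Hj). rewrite vertex_sum in Hk by auto. lra.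
Qed.


Lemma transport_follows Phi dPhi t : (t < N)%nat ->
  follows (transport Phi) (dtransport dPhi) Phi dPhi t.
Proof. intros Ht x Hx. unfold transport, dtransport. rewrite step_of_edge_edge; auto. Qed.

Lemma transport_eigen (lam : R) (Phi dPhi ddPhi : R -> R) :
  (forall s, is_derive Phi s (dPhi s)) -> (forall s, is_derive dPhi s (ddPhi s)) ->
  (forall s, ddPhi s = - lam * Phi s) -> Phi Etot = Phi 0 -> dPhi Etot = dPhi 0 ->
  eigenfun N Lg (standard_cond N Lg V) lam (transport Phi) (dtransport dPhi) (transport ddPhi).
Proof.
  intros H1 H2 H3 HP HdP. split; [|split].
  - intros n x. split; apply is_derive_Reals.
    + apply derive_coord; auto.
    + unfold dtransport, transport. eapply derive_eq.
      * apply derive_scal. apply (derive_coord dPhi ddPhi); auto.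
      * rewrite <- Rmult_assoc, dir_sq. ring.
  - intros n x _ _. unfold transport. rewrite H3. ring.
  - apply (standard_of_follows _ _ Phi dPhi); auto. intros; apply transport_follows; auto.
Qed.

Lemma eigen_follows_step lam f df ddf A B t : eigenfun N Lg (standard_cond N Lg V) lam f df ddf ->
  bval Lg f (step_start t) = Phi lam A B (arc t) ->
  bder Lg df (step_start t) = dPhi lam A B (arc t) ->
  follows f df (Phi lam A B) (dPhi lam A B) t /\
  bval Lg f (step_start (S t)) = Phi lam A B (arc (S t)) /\
  bder Lg df (step_start (S t)) = dPhi lam A B (arc (S t)).
Proof.
  intros [Hd [Hode Hst]] Hv Hb.
  assert (Hm : follows f df (Phi lam A B) (dPhi lam A B) t).
  { destruct (step_boundary f df t) as [E1 [E2 _]].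
    intros x Hx.
    apply (ode_agree lam (f (step_edge t)) (df (step_edge t)) (ddf (step_edge t))
             (fun x => Phi lam A B (coord t x)) (fun x => dir t * dPhi lam A B (coord t x))
             0 (step_len t) (start_pos t)); auto.
    - apply start_end_pos.
    - intros y. apply Hd.
    - intros y. apply Hd.
    - intros y Hy. apply Hode; [apply step_edge_lt|exact Hy].
    - intros y. apply derive_coord. intros; apply Phi_deriv.
    - intros y. eapply derive_eq.
      + apply derive_scal, (derive_coord (dPhi lam A B) (fun s => - lam * Phi lam A B s)).
        intros; apply Phi_deriv.
      + rewrite <- Rmult_assoc, dir_sq. ring.
    - rewrite <- E1, Hv, coord_start. reflexivity.
    - apply (Rmult_eq_reg_l (dir t)); [|unfold dir; destruct (Nat.even (step_start t)); lra].
      rewrite <- E2, Hb, coord_start, <- Rmult_assoc, dir_sq. ring. }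
  destruct (follows_boundary _ _ _ _ t Hm) as [_ [_ [F1 F2]]].
  destruct (standard_partner f df Hst (other_end (step_start t)) (other_end_lt _ _ (step_start_lt t)))
    as [G1 G2].
  rewrite <- step_start_S in G1, G2.
  split; [exact Hm|]. rewrite G1, G2, F1, F2. split; [reflexivity|ring].
Qed.

Lemma eigen_is_transport lam f df ddf : eigenfun N Lg (standard_cond N Lg V) lam f df ddf ->
  let A := bval Lg f (step_start 0) in let B := bder Lg df (step_start 0) in
  (forall t, (t < N)%nat -> follows f df (Phi lam A B) (dPhi lam A B) t) /\
  Phi lam A B Etot = Phi lam A B 0 /\ dPhi lam A B Etot = dPhi lam A B 0.
Proof.
  intros Heig A B. destruct (Phi_0 lam A B) as [P0 D0].
  assert (Hind : forall t, (t <= N)%nat ->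
            (forall u, (u < t)%nat -> follows f df (Phi lam A B) (dPhi lam A B) u) /\
            bval Lg f (step_start t) = Phi lam A B (arc t) /\
            bder Lg df (step_start t) = dPhi lam A B (arc t)).
  { induction t as [|t IH]; intros Ht.
    - split; [intros; lia|]. rewrite arc_0, P0, D0. split; reflexivity.
    - destruct (IH ltac:(lia)) as [IHm [Hv Hb]].
      destruct (eigen_follows_step lam f df ddf A B t Heig Hv Hb) as [Hm [Hv' Hb']].
      split; [|split; auto].
      intros u Hu. destruct (Nat.eq_dec u t) as [->|Hne]; auto. apply IHm. lia. }
  destruct (Hind N (le_n N)) as [Hm [Hv Hb]].
  rewrite walk_closes, arc_N in Hv, Hb.
  split; [exact Hm|]. rewrite P0, D0. split; symmetry; assumption.
Qed.

Lemma arc_cover s : 0 <= s <= Etot -> exists t, (t < N)%nat /\ arc t <= s <= arc (S t).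
Proof.
  intros Hs. rewrite <- arc_N in Hs.
  assert (G : forall m, (1 <= m)%nat -> 0 <= s <= arc m ->
                exists t, (t < m)%nat /\ arc t <= s <= arc (S t)).
  { induction m; intros Hm Hsm; [lia|].
    destruct (Nat.eq_dec m 0) as [->|Hm0].
    - exists 0%nat. rewrite arc_0. split; [lia|lra].
    - destruct (Rle_dec s (arc m)) as [Hle|Hgt].
      + destruct (IHm ltac:(lia) ltac:(lra)) as [t [Ht Hts]]. exists t. split; [lia|auto].
      + exists m. split; [lia|]. lra. }
  apply G; auto.
Qed.

(* consequently a function on the circle is determined by its transport *)
Lemma transport_onto s : 0 <= s <= Etot ->
  exists n x, (n < N)%nat /\ 0 <= x <= Lg n /\ forall Phi, transport Phi n x = Phi s.
Proof.
  intros Hs. destruct (arc_cover s Hs) as [t [Ht Hts]]. rewrite arc_S in Hts.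
  exists (step_edge t), (start_pos t + dir t * (s - arc t)). split; [apply step_edge_lt|]. split.
  - unfold Lg. fold (step_len t). unfold start_pos, dir. destruct (Nat.even (step_start t)); lra.
  - intros Phi. unfold transport, coord. rewrite step_of_edge_edge by auto. f_equal.
    replace (start_pos t + dir t * (s - arc t) - start_pos t) with (dir t * (s - arc t)) by ring.
    rewrite <- Rmult_assoc, dir_sq. ring.
Qed.

End Unrolling.

Definition lam_star (E : R) : R := (PI * (E + 1) / E) * (PI * (E + 1) / E).

Section StandardSpectrum.
Variables (N : nat) (ell : nat -> nat) (V : nat -> nat).
Hypothesis Hcyc : cycle_graph N V.
Hypothesis Hpos : forall n, (n < N)%nat -> (1 <= ell n)%nat.

Let Lg := fun n => INR (ell n).
Let E := Etot N ell.
Let Enat := tot_len N ell.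

Lemma Etot_pos : 0 < Etot N ell.
Proof.
  rewrite <- (arc_N N ell V Hcyc). pose proof (proj1 Hcyc).
  pose proof (arc_S N ell V (N - 1)) as HS. replace (S (N - 1)) with N in HS by lia. rewrite HS.
  pose proof (arc_mono N ell V 0 (N - 1) ltac:(lia)). rewrite arc_0 in H0.
  assert (1 <= step_len N ell V (N - 1)).
  { apply (le_INR 1), Hpos, (step_edge_lt N V Hcyc). }
  lra.
Qed.

Lemma kap_bound i : (i <= Enat)%nat -> 0 <= kap E i <= PI * (E + 1) / E.
Proof.
  intros Hi. pose proof Etot_pos as HE. fold E in HE. assert (HP := PI_RGT_0).
  assert (H2 : 2 * INR (freq_index i) <= E + 1).
  { unfold E, Etot. rewrite <- S_INR. replace 2 with (INR 2) by reflexivity. rewrite <- mult_INR.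
    apply le_INR. unfold freq_index. pose proof (Nat.Div0.mul_div_le (S i) 2). fold Enat. lia. }
  pose proof (pos_INR (freq_index i)). unfold kap. split.
  - apply Rmult_le_pos; [|left; apply Rinv_0_lt_compat; auto]. nra.
  - unfold Rdiv. apply Rmult_le_compat_r; [left; apply Rinv_0_lt_compat; auto|]. nra.
Qed.

Lemma standard_count : count_ge N Lg (standard_cond N Lg V) (lam_star E) (S Enat).
Proof.
  pose proof Etot_pos as HE. fold E in HE.
  exists (fun i => kap E i * kap E i), (fun i => transport N ell V (Bs E i)),
    (fun i => dtransport N ell V (dBs E i)),
    (fun i => transport N ell V (fun s => - (kap E i * kap E i) * Bs E i s)).
  split.
  - intros i Hi. split.
    + destruct (kap_bound i ltac:(lia)). unfold lam_star. apply Rmult_le_compat; lra.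
    + apply transport_eigen; auto.
      * intros s. apply Bs_deriv.
      * intros s. apply Bs_deriv.
      * apply Bs_periodic; auto.
      * apply Bs_periodic; auto.
  - intros c Hc. apply (Bs_independent E (S Enat) c HE).
    intros s Hs. destruct (transport_onto N ell V Hcyc s Hs) as [n [x [Hn [Hx Htr]]]].
    rewrite <- (Hc n x Hn Hx). apply rsum_ext. intros i _. rewrite Htr. reflexivity.
Qed.

Hypothesis Hodd : Nat.odd Enat = true.

Lemma frequency_of_periodic lam : 0 < lam -> lam < lam_star E -> cos (sqrt lam * E) = 1 ->
  exists q, (1 <= q)%nat /\ (2 * q < Enat)%nat /\ sqrt lam = 2 * PI * INR q / E.
Proof.
  intros Hl Hlam Hc. pose proof Etot_pos as HE. fold E in HE. assert (HPI := PI_RGT_0).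
  destruct (cos_eq_1_Z _ Hc) as [m Hm].
  assert (Hr : 0 < sqrt lam) by (apply sqrt_lt_R0; auto).
  assert (Hm0 : (0 < m)%Z).
  { apply lt_IZR. assert (0 < sqrt lam * E) by nra. rewrite Hm in H. nra. }
  exists (Z.to_nat m).
  assert (Hq : INR (Z.to_nat m) = IZR m) by (rewrite INR_IZR_INZ, Z2Nat.id; [reflexivity|lia]).
  assert (Hsq : sqrt lam = 2 * PI * INR (Z.to_nat m) / E)
    by (rewrite Hq; apply Rmult_eq_reg_r with E; [|lra]; rewrite Hm; field; lra).
  split; [lia|]. split; [|exact Hsq].
  assert (Hbound : sqrt lam < PI * (E + 1) / E).
  { destruct (Rlt_or_le (sqrt lam) (PI * (E + 1) / E)) as [|Hge]; auto. exfalso.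
    assert (0 < PI * (E + 1) / E) by (apply Rdiv_lt_0_compat; nra).
    assert (lam_star E <= lam); [|lra].
    unfold lam_star. rewrite <- (sqrt_sqrt lam) by lra. apply Rmult_le_compat; lra. }
  assert (H2 : (2 * Z.to_nat m < S Enat)%nat).
  { apply INR_lt.
    replace (INR (2 * Z.to_nat m)) with (2 * INR (Z.to_nat m)) by (rewrite mult_INR; simpl; ring).
    replace (INR (S Enat)) with (E + 1) by (rewrite S_INR; reflexivity).
    rewrite Hsq in Hbound. apply Rmult_lt_reg_r with (PI / E); [apply Rdiv_lt_0_compat; lra|].
    replace (2 * INR (Z.to_nat m) * (PI / E)) with (2 * PI * INR (Z.to_nat m) / E) by (field; lra).
    replace ((E + 1) * (PI / E)) with (PI * (E + 1) / E) by (field; lra). exact Hbound. }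
  assert (2 * Z.to_nat m <> Enat)%nat.
  { intro E2. rewrite <- E2, Nat.odd_mul in Hodd. discriminate. }
  lia.
Qed.

Lemma standard_span lam f df ddf : lam < lam_star E ->
  eigenfun N Lg (standard_cond N Lg V) lam f df ddf ->
  exists a : nat -> R, forall n x, (n < N)%nat -> 0 <= x <= Lg n ->
    f n x = lsum (seq 0 Enat) (fun y => a y * transport N ell V (Bs E y) n x).
Proof.
  intros Hlam Heig. pose proof Etot_pos as HE. fold E in HE.
  destruct (eigen_is_transport N ell V Hcyc lam f df ddf Heig) as [HM [HP HdP]].
  set (A := bval (fun n => INR (ell n)) f (step_start N V 0)) in *.
  set (B := bder (fun n => INR (ell n)) df (step_start N V 0)) in *.
  assert (Hf : forall n x, (n < N)%nat -> 0 <= x <= Lg n ->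
                 f n x = transport N ell V (Phi lam A B) n x).
  { intros n x Hn Hx. destruct (step_of_edge_spec N V Hcyc n Hn) as [T1 T2].
    assert (Hx' : 0 <= x <= step_len N ell V (step_of_edge N V n))
      by (unfold step_len; rewrite T2; exact Hx).
    destruct (HM _ T1 x Hx') as [M _]. rewrite T2 in M. exact M. }
  assert (HEn : (0 < Enat)%nat) by (apply INR_lt; exact HE).
  destruct (periodic_solution_cases lam A B E HE HP HdP) as [[HA HB]|[[Hl HB]|[Hl Hc]]].
  -
    exists (fun _ => 0). intros n x Hn Hx. rewrite Hf by auto.
    rewrite lsum_zero; [|intros; ring]. unfold transport, Phi. rewrite HA, HB. ring.
  -
    destruct (lsum_select Nat.eq_dec (seq 0 Enat) 0%nat) as [a Ha]; [apply in_seq; lia|].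
    exists (fun y => A * a y). intros n x Hn Hx. rewrite Hf by auto.
    rewrite (lsum_ext _ _ (fun y => A * (a y * transport N ell V (Bs E y) n x))) by (intros; ring).
    rewrite lsum_scal, Ha. unfold transport, Phi. rewrite Bs_const, HB, Hl by auto. unfold Cf.
    destruct (Rlt_dec 0 0); [lra|]. destruct (Rlt_dec 0 0); [lra|]. ring.
  -
    destruct (frequency_of_periodic lam Hl Hlam Hc) as [q [Hq1 [H2q Hsq]]].
    assert (B1 : forall s, Bs E (2 * (q - 1) + 1) s = cos (sqrt lam * s)).
    { intros s. unfold Bs, kap. rewrite freq_index_odd, phase_odd.
      replace (S (q - 1)) with q by lia. rewrite Hsq. f_equal. ring. }
    assert (B2 : forall s, Bs E (2 * q) s = sin (sqrt lam * s)).
    { intros s. unfold Bs, kap. rewrite freq_index_even, phase_even.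
      replace (q =? 0)%nat with false by (symmetry; apply Nat.eqb_neq; lia).
      rewrite cos_minus, cos_PI2, sin_PI2, Hsq. ring. }
    destruct (lsum_select2 Nat.eq_dec (seq 0 Enat) (2 * (q - 1) + 1)%nat (2 * q)%nat A (B / sqrt lam))
      as [a Ha]; try (apply in_seq; lia).
    exists a. intros n x Hn Hx. rewrite Hf by auto. rewrite Ha. unfold transport, Phi, Cf, Sf.
    destruct (Rlt_dec 0 lam); [|lra]. rewrite B1, B2. unfold Rdiv. ring.
Qed.

Lemma standard_not_count mu : mu < lam_star E ->
  ~ count_ge N Lg (standard_cond N Lg V) mu (S Enat).
Proof.
  intros Hmu [lams [fs [dfs [ddfs [Heig Hind]]]]].
  destruct (finite_choice (fun _ => 0) (S Enat)
              (fun i a => forall n x, (n < N)%nat -> 0 <= x <= Lg n ->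
                 fs i n x = lsum (seq 0 Enat) (fun y => a y * transport N ell V (Bs E y) n x)))
    as [A HA].
  { intros i Hi. destruct (Heig i Hi) as [Hl He].
    apply (standard_span (lams i) (fs i) (dfs i) (ddfs i)); auto; lra. }
  destruct (span_dependent Nat.eq_dec (seq 0 Enat) (S Enat) fs (fun y => transport N ell V (Bs E y)) A
              (fun n x => (n < N)%nat /\ 0 <= x <= Lg n)) as [c [[i [Hi Hci]] Hc]].
  - rewrite length_seq. lia.
  - intros i n x Hi [Hn Hx]. apply HA; auto.
  - apply Hci. apply (Hind c); [intros n x Hn Hx; apply Hc; auto | exact Hi].
Qed.

End StandardSpectrum.

Lemma lam_star_gt E : 0 < E -> PI * PI < lam_star E.
Proof.
  intros HE. assert (HP := PI_RGT_0). unfold lam_star.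
  assert (PI < PI * (E + 1) / E).
  { apply Rmult_lt_reg_r with E; auto. unfold Rdiv. rewrite Rmult_assoc, Rinv_l by lra. nra. }
  apply Rmult_gt_0_lt_compat; lra.
Qed.

Section DirichletSpectrum.
Variables (N : nat) (ell : nat -> nat) (V : nat -> nat).
Hypothesis Hpos : forall n, (n < N)%nat -> (1 <= ell n)%nat.

Let Lg := fun n => INR (ell n).
Let Enat := tot_len N ell.

Lemma Lg_ge_1 n : (n < N)%nat -> 1 <= Lg n.
Proof. intros. unfold Lg. apply (le_INR 1). auto. Qed.

(** The [i]-th mode, [i < Enat], is mode [mode_index i] of edge [mode_edge i]:
    the indices [tot_len n ell <= i < tot_len (S n) ell] belong to edge [n]. *)
Definition mode_edge (i : nat) : nat := find_last (fun n => Nat.leb (tot_len n ell) i) N.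
Definition mode_index (i : nat) : nat := S (i - tot_len (mode_edge i) ell).

Lemma mode_spec i : (i < Enat)%nat ->
  (mode_edge i < N)%nat /\ (tot_len (mode_edge i) ell <= i < tot_len (S (mode_edge i)) ell)%nat /\
  (1 <= mode_index i <= ell (mode_edge i))%nat.
Proof.
  intros Hi. assert (HN : (0 < N)%nat).
  { destruct (Nat.eq_dec N 0) as [E|E]; [|lia]. unfold Enat in Hi. rewrite E in Hi. simpl in Hi. lia. }
  destruct (find_last_spec (fun n => Nat.leb (tot_len n ell) i) N) as [H1 H2].
  - exists 0%nat. split; [exact HN|]. apply Nat.leb_le. simpl. lia.
  - fold (mode_edge i) in H1, H2. apply Nat.leb_le in H2.
    assert (H3 : (i < tot_len (S (mode_edge i)) ell)%nat).
    { destruct (Nat.eq_dec (S (mode_edge i)) N) as [E|E]; [rewrite E; exact Hi|].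
      apply Nat.leb_gt, (find_last_max (fun n => Nat.leb (tot_len n ell) i) N);
        unfold mode_edge in *; lia. }
    unfold mode_index. cbn [tot_len] in *. lia.
Qed.

Lemma mode_inj i i' : (i < Enat)%nat -> (i' < Enat)%nat ->
  mode_edge i = mode_edge i' -> mode_index i = mode_index i' -> i = i'.
Proof.
  intros Hi Hi' E1 E2. pose proof (mode_spec i Hi). pose proof (mode_spec i' Hi').
  unfold mode_index in E2. rewrite E1 in *. lia.
Qed.

Definition mode_freq (i : nat) : R := INR (mode_index i) * PI / Lg (mode_edge i).
Definition mode (i : nat) (n : nat) (x : R) : R :=
  if Nat.eqb n (mode_edge i) then sin (mode_freq i * x) else 0.
Definition dmode (i : nat) (n : nat) (x : R) : R :=
  if Nat.eqb n (mode_edge i) then mode_freq i * cos (mode_freq i * x) else 0.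
Definition ddmode (i : nat) (n : nat) (x : R) : R :=
  if Nat.eqb n (mode_edge i) then - (mode_freq i * mode_freq i) * sin (mode_freq i * x) else 0.

Lemma mode_eigen i : (i < Enat)%nat ->
  mode_freq i * mode_freq i <= PI * PI /\
  eigenfun N Lg (dirichlet_cond N Lg V) (mode_freq i * mode_freq i) (mode i) (dmode i) (ddmode i).
Proof.
  intros Hi. assert (HP := PI_RGT_0). destruct (mode_spec i Hi) as [D1 [_ D3]].
  pose proof (Lg_ge_1 _ D1) as HL.
  assert (Hf : 0 <= mode_freq i <= PI).
  { unfold mode_freq. split.
    - apply Rmult_le_pos; [apply Rmult_le_pos; [apply pos_INR|lra]|left; apply Rinv_0_lt_compat; lra].
    - apply Rmult_le_reg_r with (Lg (mode_edge i)); [lra|]. unfold Rdiv.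
      rewrite Rmult_assoc, Rinv_l, Rmult_1_r, Rmult_comm by lra.
      apply Rmult_le_compat_l; [lra|]. apply le_INR. lia. }
  split; [apply Rmult_le_compat; lra|]. split; [|split].
  - intros n x. unfold mode, dmode, ddmode. destruct (Nat.eqb n (mode_edge i)); split;
      apply is_derive_Reals.
    + eapply derive_eq. apply (derive_dilate sin x (mode_freq i)), is_derive_sin. ring.
    + eapply derive_eq. apply derive_scal, (derive_dilate cos x (mode_freq i)), is_derive_cos. ring.
    + apply derive_const.
    + apply derive_const.
  - intros n x _ _. unfold mode, ddmode. destruct (Nat.eqb n (mode_edge i)); ring.
  - intros j Hj. unfold bval, mode, ep_pos.
    destruct (Nat.eqb_spec (ep_edge j) (mode_edge i)) as [E|E]; auto.
    destruct (Nat.even j); [rewrite Rmult_0_r; apply sin_0|].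
    unfold ep_edge in E. rewrite E. unfold mode_freq.
    replace (INR (mode_index i) * PI / Lg (mode_edge i) * Lg (mode_edge i))
      with (INR (mode_index i) * PI) by (field; lra).
    apply sin_nat_PI.
Qed.

(* the modes are independent: on edge [mode_edge i0] only modes of that edge
   survive, and distinct modes of one edge have distinct frequencies *)
Lemma modes_independent (c : nat -> R) :
  (forall n x, (n < N)%nat -> 0 <= x <= Lg n -> rsum Enat (fun i => c i * mode i n x) = 0) ->
  forall i0, (i0 < Enat)%nat -> c i0 = 0.
Proof.
  intros Hc i0 Hi0. destruct (mode_spec i0 Hi0) as [D1 [_ D3]].
  pose proof (Lg_ge_1 _ D1) as HL. set (n0 := mode_edge i0) in *.
  set (d := fun i => if Nat.eqb n0 (mode_edge i) then c i else 0).
  set (mm := fun i => if Nat.eqb n0 (mode_edge i) then mode_index i else 1%nat).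
  assert (Hmm : forall i, (i < Enat)%nat -> (1 <= mm i)%nat).
  { intros i Hi. unfold mm. destruct (Nat.eqb n0 (mode_edge i)); [apply mode_spec|]; auto. }
  assert (Hz : forall x, 0 <= x <= Lg n0 ->
                 rsum Enat (fun i => d i * sin (INR (mm i) * PI / Lg n0 * x)) = 0).
  { intros x Hx. rewrite <- (Hc n0 x D1 Hx). apply rsum_ext. intros i Hi.
    unfold d, mm, mode, mode_freq. destruct (Nat.eqb_spec n0 (mode_edge i)) as [E|E].
    - rewrite E. reflexivity.
    - ring. }
  pose proof (sines_independent (Lg n0) Enat d mm ltac:(lra) Hmm Hz (mode_index i0) ltac:(lia)) as H.
  rewrite (rsum_ext Enat _ (fun i => if Nat.eqb i i0 then c i else 0)) in H.
  - rewrite rsum_single in H; auto.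
  - intros i Hi. unfold d, mm. destruct (Nat.eqb_spec n0 (mode_edge i)) as [E|E].
    + destruct (Nat.eqb_spec (mode_index i) (mode_index i0)) as [E'|E'].
      * assert (i = i0) by (apply mode_inj; auto). subst. rewrite Nat.eqb_refl. auto.
      * destruct (Nat.eqb_spec i i0); [subst; congruence|auto].
    + destruct (Nat.eqb_spec i i0) as [->|Hne]; [exfalso; apply E; reflexivity|].
      destruct (Nat.eqb 1 (mode_index i0)); reflexivity.
Qed.

Lemma dirichlet_count : count_ge N Lg (dirichlet_cond N Lg V) (PI * PI) Enat.
Proof.
  exists (fun i => mode_freq i * mode_freq i), mode, dmode, ddmode. split.
  - intros i Hi. apply mode_eigen; auto.
  - exact modes_independent.
Qed.

Lemma sine_mode lam (l : nat) : (1 <= l)%nat -> 0 < lam < PI * PI -> sin (sqrt lam * INR l) = 0 ->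
  exists k : nat, (1 <= k <= l - 1)%nat /\ sqrt lam = INR k * PI / INR l.
Proof.
  intros Hl1 Hlam Hs. assert (HP := PI_RGT_0). assert (Hl : 0 < INR l) by (apply lt_0_INR; lia).
  assert (Hr : 0 < sqrt lam) by (apply sqrt_lt_R0; lra).
  assert (Hrp : sqrt lam < PI).
  { destruct (Rlt_or_le (sqrt lam) PI) as [|Hge]; auto. exfalso.
    assert (PI * PI <= lam); [|lra].
    rewrite <- (sqrt_sqrt lam) by lra. apply Rmult_le_compat; lra. }
  destruct (sin_eq_0_0 _ Hs) as [k Hk].
  assert (Hk0 : (0 < k)%Z).
  { apply lt_IZR. assert (0 < sqrt lam * INR l) by nra. rewrite Hk in H. nra. }
  exists (Z.to_nat k).
  assert (Hkn : INR (Z.to_nat k) = IZR k) by (rewrite INR_IZR_INZ, Z2Nat.id; [reflexivity|lia]).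
  split.
  - enough (Z.to_nat k < l)%nat by lia.
    apply INR_lt. rewrite Hkn. apply Rmult_lt_reg_r with PI; auto.
    rewrite <- Hk, (Rmult_comm (INR l)). apply Rmult_lt_compat_r; lra.
  - rewrite Hkn, <- Hk. field. lra.
Qed.

Lemma dirichlet_edge lam f df ddf : eigenfun N Lg (dirichlet_cond N Lg V) lam f df ddf ->
  lam < PI * PI -> forall n, (n < N)%nat -> exists p : R * nat,
    (fst p = 0 \/ (1 <= snd p <= ell n - 1)%nat) /\
    forall x, 0 <= x <= Lg n -> f n x = fst p * sin (INR (snd p) * PI / Lg n * x).
Proof.
  intros [Hd [Hode Hbc]] Hlam n Hn. pose proof (Lg_ge_1 n Hn) as HL.
  assert (F0 : f n 0 = 0).
  { pose proof (Hbc (2 * n)%nat ltac:(lia)) as H. unfold bval, ep_pos, ep_edge in H.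
    rewrite even_double, div2_double in H. exact H. }
  assert (FL : f n (Lg n) = 0).
  { pose proof (Hbc (2 * n + 1)%nat ltac:(lia)) as H. unfold bval, ep_pos, ep_edge in H.
    rewrite even_double_succ, div2_double_succ in H. exact H. }
  (* [f n] is the solution with Cauchy data [(0, df n 0)] at [0] *)
  assert (Hrep : forall x, 0 <= x <= Lg n -> f n x = df n 0 * Sf lam x).
  { intros x Hx. destruct (Phi_0 lam 0 (df n 0)) as [P0 D0].
    destruct (ode_agree lam (f n) (df n) (ddf n) (Phi lam 0 (df n 0)) (dPhi lam 0 (df n 0))
                0 (Lg n) 0 ltac:(lra) (fun x => proj1 (Hd n x)) (fun x => proj2 (Hd n x))
                (fun x Hx => Hode n x Hn Hx) (fun x => proj1 (Phi_deriv lam 0 (df n 0) x))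
                (fun x => proj2 (Phi_deriv lam 0 (df n 0) x))
                ltac:(rewrite P0; exact F0) ltac:(rewrite D0; reflexivity) x Hx) as [E _].
    rewrite E. unfold Phi. ring. }
  destruct (Req_dec (df n 0) 0) as [Hd0|Hd0].
  - exists (0, 1%nat). split; [left; reflexivity|]. intros x Hx. rewrite Hrep, Hd0 by auto.
    simpl. ring.
  - assert (HS : Sf lam (Lg n) = 0).
    { rewrite Hrep in FL by lra. apply Rmult_integral in FL. destruct FL; [contradiction|auto]. }
    destruct (Sf_eq_0 lam (Lg n) ltac:(lra) HS) as [Hl Hs].
    destruct (sine_mode lam (ell n) (Hpos n Hn) ltac:(lra) Hs) as [k [Hk Hsq]].
    exists (df n 0 / sqrt lam, k). split; [right; exact Hk|].
    intros x Hx. rewrite Hrep by auto. unfold Sf. destruct (Rlt_dec 0 lam); [|lra].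
    simpl. fold (Lg n) in Hsq. rewrite <- Hsq. unfold Rdiv. ring.
Qed.

Definition low_modes : list (nat * nat) :=
  flat_map (fun n => map (fun k => (n, k)) (seq 1 (ell n - 1))) (seq 0 N).

Definition low_mode (y : nat * nat) (n : nat) (x : R) : R :=
  if Nat.eqb n (fst y) then sin (INR (snd y) * PI / Lg n * x) else 0.

Definition pair_eq_dec (x y : nat * nat) : {x = y} + {x <> y}.
Proof. decide equality; apply Nat.eq_dec. Defined.

Lemma low_modes_in n k : (n < N)%nat -> (1 <= k <= ell n - 1)%nat -> In (n, k) low_modes.
Proof.
  intros Hn Hk. unfold low_modes. apply in_flat_map. exists n. split; [apply in_seq; lia|].
  apply in_map_iff. exists k. split; auto. apply in_seq. lia.
Qed.

Lemma low_modes_length : (length low_modes + N = Enat)%nat.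
Proof.
  unfold low_modes, Enat.
  assert (G : forall m, (m <= N)%nat ->
    (length (flat_map (fun n => map (fun k => (n, k)) (seq 1 (ell n - 1))) (seq 0 m)) + m
     = tot_len m ell)%nat).
  { induction m; intros Hm; [reflexivity|]. rewrite seq_S, flat_map_app, length_app. simpl.
    rewrite length_app, length_map, length_seq. simpl. specialize (IHm ltac:(lia)).
    pose proof (Hpos m ltac:(lia)). lia. }
  apply G. lia.
Qed.

Lemma dirichlet_span lam f df ddf : eigenfun N Lg (dirichlet_cond N Lg V) lam f df ddf ->
  lam < PI * PI ->
  exists a : nat * nat -> R, forall n x, (n < N)%nat -> 0 <= x <= Lg n ->
    f n x = lsum low_modes (fun y => a y * low_mode y n x).
Proof.
  intros Heig Hlam.
  destruct (finite_choice (0, 1%nat) N (fun n p => (fst p = 0 \/ (1 <= snd p <= ell n - 1)%nat) /\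
    forall x, 0 <= x <= Lg n -> f n x = fst p * sin (INR (snd p) * PI / Lg n * x))) as [P HP].
  { intros n Hn. apply (dirichlet_edge lam f df ddf Heig Hlam n Hn). }
  (* the coefficient of [(n, snd (P n))] is [fst (P n)], shared among its repetitions *)
  exists (fun y => if Nat.eqb (snd y) (snd (P (fst y)))
                   then fst (P (fst y)) / INR (count_occ pair_eq_dec low_modes y) else 0).
  intros n x Hn Hx. destruct (HP n Hn) as [Hc Hf].
  set (y0 := (n, snd (P n))). set (b := fst (P n)).
  set (sx := sin (INR (snd (P n)) * PI / Lg n * x)).
  rewrite (lsum_ext low_modes _ (fun y => if pair_eq_dec y y0
                                     then b / INR (count_occ pair_eq_dec low_modes y0) * sx else 0)).
  - rewrite lsum_count, Hf by auto. fold b sx. destruct Hc as [Hc|Hc].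
    + fold b in Hc. rewrite Hc. unfold Rdiv. ring.
    + assert (Hcnt : (0 < count_occ pair_eq_dec low_modes y0)%nat)
        by (apply count_occ_In, low_modes_in; auto).
      field. apply not_0_INR. lia.
  - intros [n' k] Hy. unfold low_mode. cbn [fst snd].
    destruct (pair_eq_dec (n', k) y0) as [E|E].
    + injection E as -> ->. rewrite !Nat.eqb_refl. unfold b, sx, y0. ring.
    + destruct (Nat.eqb_spec n n') as [->|Hne]; [|ring].
      destruct (Nat.eqb_spec k (snd (P n'))) as [->|Hk]; [|ring].
      exfalso. apply E. reflexivity.
Qed.

Lemma dirichlet_not_count mu : (1 <= N)%nat -> mu < PI * PI ->
  ~ count_ge N Lg (dirichlet_cond N Lg V) mu Enat.
Proof.
  intros HN Hmu [lams [fs [dfs [ddfs [Heig Hind]]]]].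
  destruct (finite_choice (fun _ => 0) Enat (fun i a => forall n x, (n < N)%nat -> 0 <= x <= Lg n ->
      fs i n x = lsum low_modes (fun y => a y * low_mode y n x))) as [A HA].
  { intros i Hi. destruct (Heig i Hi) as [Hl He].
    apply (dirichlet_span (lams i) (fs i) (dfs i) (ddfs i)); auto. lra. }
  destruct (span_dependent pair_eq_dec low_modes Enat fs low_mode A
              (fun n x => (n < N)%nat /\ 0 <= x <= Lg n)) as [c [[i [Hi Hci]] Hc]].
  - pose proof low_modes_length. lia.
  - intros i n x Hi [Hn Hx]. apply HA; auto.
  - apply Hci. apply (Hind c); [intros n x Hn Hx; apply Hc; auto | exact Hi].
Qed.

End DirichletSpectrum.

Theorem mainTheorem16 (N : nat) (ell : nat -> nat) (V : nat -> nat)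
  (Hcyc : cycle_graph N V)
  (Hpos : forall n, (n < N)%nat -> (1 <= ell n)%nat)
  (Hgcd : gcd_all N ell = 1%nat)
  (Hodd : Nat.odd (tot_len N ell) = true) :
  exists lam_st lam_D : R,
    is_nth_eigenvalue N (fun n => INR (ell n)) (standard_cond N (fun n => INR (ell n)) V)
      (S (tot_len N ell)) lam_st /\
    is_nth_eigenvalue N (fun n => INR (ell n)) (dirichlet_cond N (fun n => INR (ell n)) V)
      (tot_len N ell) lam_D /\
    lam_st > lam_D.
Proof.
  exists (lam_star (Etot N ell)), (PI * PI). split; [|split].
  - split.
    + exact (standard_count N ell V Hcyc Hpos).
    + intros mu Hmu. exact (standard_not_count N ell V Hcyc Hpos Hodd mu Hmu).
  - split.
    + exact (dirichlet_count N ell V Hpos).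
    + intros mu Hmu. exact (dirichlet_not_count N ell V Hpos mu (proj1 Hcyc) Hmu).
  - apply Rlt_gt, lam_star_gt, (Etot_pos N ell V Hcyc Hpos).
Qed.
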